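(* Every U(1)-invariant operation $\mathcal{E}$ on $\mathcal{H}'$ admits a Kraus decomposition $\{K_{k,\alpha}\}$, with $k\in\mathbb{Z}$ and $\alpha$ an integer (multiplicity) index, such that $$K_{k,\alpha}=S_k\tilde K_{k,\alpha},\qquad \tilde K_{k,\alpha}=\sum_{n}c^{(k,\alpha)}_n|n\rangle\langle n|,\qquad S_k=\sum_{n=\max\{0,-k\}}^{\infty}|n+k\rangle\langle n|,$$ for some complex coefficients $c_n^{(k,\alpha)}$. Thus $\tilde K_{k,\alpha}$ changes the relative amplitudes of the number states (possibly eliminating some) and $S_k$ shifts the number upward by $k$ (downward by $|k|$ if $k<0$). The coefficients satisfy $\sum_{k,\alpha}|c_n^{(k,\alpha)}|^2\le 1$ for all $n$, with equality for all $n$ if $\mathcal{E}$ is trace-preserving.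
   Context: Let $\mathcal{H}'$ be the Hilbert space with orthonormal basis $\{|n\rangle: n=0,1,2,\dots\}$, let $\hat N=\sum_n n|n\rangle\langle n|$, and let U(1) act by $T(\phi)=e^{i\phi\hat N}$, $\phi\in[0,2\pi)$. A U(1)-invariant operation is a completely positive, trace-nonincreasing linear map $\mathcal{E}$ on (trace-class) operators on $\mathcal{H}'$ such that $\mathcal{E}(T(\phi)XT(\phi)^\dagger)=T(\phi)\mathcal{E}(X)T(\phi)^\dagger$ for all $\phi$ and all $X$. A Kraus decomposition of $\mathcal{E}$ is a family of operators $\{K_i\}$ with $\mathcal{E}(X)=\sum_iK_iXK_i^\dagger$. *)

From Stdlib Require Import Reals ZArith List Lia Lra.
From Coquelicot Require Import Coquelicot.
Open Scope R_scope.

Definition lsum {I : Type} (f : I -> C) (F : list I) : C :=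
  fold_right Cplus (RtoC 0) (map f F).

(* [has_sum f s]: the net of finite partial sums of f converges to s
   (sum over finite subsets of I, directed by inclusion).  For complex
   families this is equivalent to absolute summability. *)
Definition has_sum {I : Type} (f : I -> C) (s : C) : Prop :=
  forall eps : R, 0 < eps ->
    exists F0 : list I, forall F : list I,
      NoDup F -> incl F0 F -> Cmod (Cminus (lsum f F) s) < eps.

Definition is_l2 (psi : nat -> C) (r : R) : Prop :=
  0 <= r /\ has_sum (fun n => RtoC (Cmod (psi n) ^ 2)) (RtoC (r ^ 2)).

(* Operators are represented by their matrix elements  X m n = <m|X|n>. *)
Definition op := nat -> nat -> C.

(* Trace-class (= nuclear) operators: X = sum_i |u_i><v_i| with
   sum_i ||u_i|| ||v_i|| < oo (matrix elements converge). *)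
Definition trace_class (X : op) : Prop :=
  exists (u v : nat -> nat -> C) (nu nv : nat -> R) (t : C),
    (forall i, is_l2 (u i) (nu i) /\ is_l2 (v i) (nv i)) /\
    has_sum (fun i => RtoC (nu i * nv i)) t /\
    forall m n, has_sum (fun i => Cmult (u i m) (Cconj (v i n))) (X m n).

Definition has_trace (X : op) (t : C) : Prop := has_sum (fun n => X n n) t.

Fixpoint fsum (N : nat) (f : nat -> C) : C :=
  match N with
  | O => RtoC 0
  | S N' => Cplus (fsum N' f) (f N')
  end.

(* Positivity of a d x d block operator (an operator on C^d (x) H'):
   <psi, X psi> is real and >= 0 for every psi (finitely supported vectors
   suffice, being dense and the form being continuous for trace-class X). *)
Definition psd_block (d : nat) (Xb : nat -> nat -> op) : Prop :=
  forall (psi : nat -> nat -> C) (N : nat),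
    (forall i m, (N <= m)%nat -> psi i m = RtoC 0) ->
    exists r : R, 0 <= r /\
      fsum d (fun i => fsum d (fun j => fsum N (fun m => fsum N (fun n =>
        Cmult (Cmult (Cconj (psi i m)) (Xb i j m n)) (psi j n))))) = RtoC r.

Definition positive (X : op) : Prop := psd_block 1 (fun _ _ => X).

Definition op_add (X Y : op) : op := fun m n => Cplus (X m n) (Y m n).
Definition op_scale (a : C) (X : op) : op := fun m n => Cmult a (X m n).

Definition is_operation (E : op -> op) : Prop :=
  (forall X, trace_class X -> trace_class (E X)) /\
  (forall (a : C) X Y, trace_class X -> trace_class Y ->
     forall m n, E (op_add (op_scale a X) Y) m n
                 = Cplus (Cmult a (E X m n)) (E Y m n)) /\
  (forall (d : nat) (Xb : nat -> nat -> op),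
     (forall i j, (i < d)%nat -> (j < d)%nat -> trace_class (Xb i j)) ->
     psd_block d Xb -> psd_block d (fun i j => E (Xb i j))) /\
  (forall X t t', trace_class X -> positive X ->
     has_trace X t -> has_trace (E X) t' -> Re t' <= Re t).

Definition trace_preserving (E : op -> op) : Prop :=
  forall X t, trace_class X -> has_trace X t -> has_trace (E X) t.

Definition expi (x : R) : C := (cos x, sin x).

(* T(phi) X T(phi)^dagger : matrix elements e^{i phi m} X m n e^{-i phi n} *)
Definition conjT (phi : R) (X : op) : op :=
  fun m n => Cmult (Cmult (expi (phi * INR m)) (X m n)) (Cconj (expi (phi * INR n))).

Definition U1_invariant (E : op -> op) : Prop :=
  forall phi, 0 <= phi < 2 * PI ->
    forall X, trace_class X -> forall m n, E (conjT phi X) m n = conjT phi (E X) m n.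

Definition shift (k : Z) : op :=
  fun m n => if Z.eqb (Z.of_nat m) (Z.of_nat n + k)%Z then RtoC 1 else RtoC 0.

Definition diag (c : nat -> C) : op :=
  fun m n => if Nat.eqb m n then c n else RtoC 0.

(* S_k * diag c : the product has a single nonzero term in the inner sum,
   <m|S_k diag(c)|n> = <m|S_k|n> c_n. *)
Definition shift_diag (k : Z) (c : nat -> C) : op :=
  fun m n => Cmult (shift k m n) (c n).

Definition sandwich (K X Y : op) : Prop :=
  forall p q, has_sum (fun mn : nat * nat =>
      Cmult (Cmult (K p (fst mn)) (X (fst mn) (snd mn))) (Cconj (K q (snd mn))))
    (Y p q).

(* By U(1) covariance, [<p| E(|m><n|) |q>] vanishes unless [p - m = q - n], so [E] is determined by the
   bands [A_k(m, n) = <m+k| E(|m><n|) |n+k>], [k] an integer. Complete positivity makes every [A_k] positive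
   semidefinite, and a Cholesky factorisation [A_k(m, n) = sum_al c^(k,al)_m conj (c^(k,al)_n)], in which
   [c^(k,al)] is supported on [m >= al] (so that every sum involved is finite), yields the Kraus
   coefficients. Then [sum_(k,al) |c^(k,al)_n|^2 = sum_k A_k(n, n) = tr E(|n><n|) <= 1].
   For a trace-class [X = sum_i |a_i><b_i|] the Kraus expansion of [E X] holds on the truncations of [X] by
   linearity. It passes to the limit because complete positivity gives the continuity bound
   [|<p| E(sum_i |a_i><b_i|) |q>|^2 <= sum_i |a_i|^2 * sum_i |b_i|^2], and because the Kraus terms outside a
   finite block are controlled by the tails of [sum_i |a_i|^2] and [sum_i |b_i|^2]. *)

From Pilot Require Import Defs.
From Stdlib Require Import Reals ZArith List Lia Lra Permutation.
From Stdlib Require Import Classical ClassicalEpsilon FunctionalExtensionality Bool.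
From Coquelicot Require Import Coquelicot.
Set Bullet Behavior "Strict Subproofs".
Open Scope R_scope.

(** * Finite and unconditional sums *)

Definition rsum {I : Type} (g : I -> R) (F : list I) : R :=
  fold_right Rplus 0 (map g F).

Lemma lsum_nil {I} (f : I -> C) : lsum f nil = RtoC 0.
Proof. reflexivity. Qed.

Lemma lsum_cons {I} (f : I -> C) x F : lsum f (x :: F) = Cplus (f x) (lsum f F).
Proof. reflexivity. Qed.

Lemma rsum_cons {I} (g : I -> R) x F : rsum g (x :: F) = g x + rsum g F.
Proof. reflexivity. Qed.

Lemma lsum_app {I} (f : I -> C) F G : lsum f (F ++ G) = Cplus (lsum f F) (lsum f G).
Proof. induction F; simpl. unfold lsum; simpl; ring.
 unfold lsum in *; simpl; rewrite IHF; ring. Qed.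

Lemma rsum_app {I} (g : I -> R) F G : rsum g (F ++ G) = rsum g F + rsum g G.
Proof. induction F; simpl. unfold rsum; simpl; ring.
 unfold rsum in *; simpl; rewrite IHF; ring. Qed.

Lemma lsum_RtoC {I} (g : I -> R) F : lsum (fun x => RtoC (g x)) F = RtoC (rsum g F).
Proof. induction F. reflexivity. rewrite lsum_cons, rsum_cons, IHF, RtoC_plus. reflexivity. Qed.

Lemma lsum_perm {I} (f : I -> C) F G : Permutation F G -> lsum f F = lsum f G.
Proof. induction 1; auto.
 - rewrite !lsum_cons, IHPermutation; reflexivity.
 - rewrite !lsum_cons; ring.
 - congruence. Qed.

Lemma rsum_perm {I} (f : I -> R) F G : Permutation F G -> rsum f F = rsum f G.
Proof. induction 1; auto.
 - rewrite !rsum_cons, IHPermutation; reflexivity.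
 - rewrite !rsum_cons; ring.
 - congruence. Qed.

Lemma lsum_ext {I} (f g : I -> C) F : (forall x, In x F -> f x = g x) -> lsum f F = lsum g F.
Proof. induction F; intros H. reflexivity. rewrite !lsum_cons, H, IHF; auto.
 intros; apply H; simpl; auto. simpl; auto. Qed.

Lemma rsum_ext {I} (f g : I -> R) F : (forall x, In x F -> f x = g x) -> rsum f F = rsum g F.
Proof. induction F; intros H. reflexivity. rewrite !rsum_cons, H, IHF; auto.
 intros; apply H; simpl; auto. simpl; auto. Qed.

Lemma lsum_plus {I} (f g : I -> C) F : lsum (fun x => Cplus (f x) (g x)) F = Cplus (lsum f F) (lsum g F).
Proof. induction F. unfold lsum; simpl; ring. rewrite !lsum_cons, IHF; ring. Qed.

Lemma lsum_scal {I} (a : C) (f : I -> C) F : lsum (fun x => Cmult a (f x)) F = Cmult a (lsum f F).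
Proof. induction F. unfold lsum; simpl; ring. rewrite !lsum_cons, IHF; ring. Qed.

Lemma lsum_zero {I} (f : I -> C) F : (forall x, In x F -> f x = RtoC 0) -> lsum f F = RtoC 0.
Proof. intros H. rewrite (lsum_ext f (fun _ => RtoC 0)); auto. clear H.
 induction F. reflexivity. rewrite lsum_cons, IHF. ring. Qed.

Lemma rsum_plus {I} (f g : I -> R) F : rsum (fun x => f x + g x) F = rsum f F + rsum g F.
Proof. induction F. unfold rsum; simpl; ring. rewrite !rsum_cons, IHF; ring. Qed.

Lemma rsum_scal {I} a (f : I -> R) F : rsum (fun x => a * f x) F = a * rsum f F.
Proof. induction F. unfold rsum; simpl; ring. rewrite !rsum_cons, IHF; ring. Qed.

Lemma rsum_nonneg {I} (f : I -> R) F : (forall x, 0 <= f x) -> 0 <= rsum f F.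
Proof. intros H; induction F. unfold rsum; simpl; lra. rewrite rsum_cons; specialize (H a); lra. Qed.

Lemma rsum_le {I} (f g : I -> R) F : (forall x, In x F -> f x <= g x) -> rsum f F <= rsum g F.
Proof. induction F; intros H. unfold rsum; simpl; lra. rewrite !rsum_cons.
 assert (f a <= g a) by (apply H; simpl; auto).
 assert (rsum f F <= rsum g F) by (apply IHF; intros; apply H; simpl; auto). lra. Qed.

Lemma rsum_zero {I} (f : I -> R) F : (forall x, In x F -> f x = 0) -> rsum f F = 0.
Proof. induction F; intros H. reflexivity. rewrite rsum_cons, H, IHF. ring.
 intros; apply H; simpl; auto. simpl; auto. Qed.

Lemma Cmod_lsum {I} (f : I -> C) F : Cmod (lsum f F) <= rsum (fun x => Cmod (f x)) F.
Proof. induction F. unfold lsum, rsum; simpl. rewrite Cmod_0; lra.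
 rewrite lsum_cons, rsum_cons. eapply Rle_trans. apply Cmod_triangle. lra. Qed.

Lemma rsum_le_incl {I} (g : I -> R) (F G : list I) :
  (forall x, 0 <= g x) -> NoDup F -> (forall x, In x F -> g x <> 0 -> In x G) ->
  rsum g F <= rsum g G.
Proof. intros Hg HF; revert G. induction HF as [|a F Ha HF IH]; intros G HG.
 - unfold rsum at 1; simpl. apply rsum_nonneg; auto.
 - rewrite rsum_cons. destruct (Req_dec (g a) 0) as [E|E].
   + rewrite E. replace (0 + rsum g F) with (rsum g F) by ring. apply IH.
     intros; apply HG; simpl; auto.
   + assert (Hin : In a G) by (apply HG; simpl; auto).
     destruct (in_split _ _ Hin) as [G1 [G2 EG]].
     assert (Hp : Permutation G (a :: G1 ++ G2)) by (rewrite EG; apply Permutation_sym, Permutation_middle).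
     rewrite (rsum_perm _ _ _ Hp), rsum_cons.
     assert (rsum g F <= rsum g (G1 ++ G2)); [|lra].
     apply IH. intros y Hy Hgy. assert (In y G) by (apply HG; simpl; auto).
     assert (y <> a) by (intro; subst; contradiction).
     apply (Permutation_in _ Hp) in H. destruct H; [congruence| auto]. Qed.

Lemma nodup_split {I} (dec : forall x y : I, {x = y} + {x <> y}) (F0 F : list I) :
  NoDup F0 -> NoDup F -> incl F0 F ->
  exists R, Permutation F (F0 ++ R) /\ (forall x, In x R -> In x F /\ ~ In x F0) /\ NoDup R.
Proof. intros H0 HF Hi. exists (filter (fun x => if in_dec dec x F0 then false else true) F).
 split; [|split].
 - apply NoDup_Permutation; auto.
   + apply NoDup_app; auto. apply NoDup_filter; auto.
     intros x Hx Hx'. apply filter_In in Hx'. destruct Hx' as [_ Hc].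
     destruct (in_dec dec x F0); [discriminate|contradiction].
   + intros x; split; intros Hx.
     * apply in_or_app. destruct (in_dec dec x F0); auto. right; apply filter_In; split; auto.
       destruct (in_dec dec x F0); [contradiction|auto].
     * apply in_app_or in Hx. destruct Hx; auto. apply filter_In in H; tauto.
 - intros x Hx. apply filter_In in Hx. destruct Hx as [A B]. destruct (in_dec dec x F0); [discriminate|auto].
 - apply NoDup_filter; auto. Qed.

Lemma has_sum_unique {I} (dec : forall x y : I, {x = y} + {x <> y}) (f : I -> C) a b :
  has_sum f a -> has_sum f b -> a = b.
Proof. intros Ha Hb. apply Ceq_minus. apply Cmod_eq_0.
 apply Rle_antisym; [|apply Cmod_ge_0]. apply Rnot_lt_le; intros Hlt.
 set (e := Cmod (Cminus a b) / 2).
 destruct (Ha e) as [Fa HFa]. unfold e; lra. destruct (Hb e) as [Fb HFb]. unfold e; lra.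
 set (F := nodup dec (Fa ++ Fb)).
 assert (NoDup F) by apply NoDup_nodup.
 assert (incl Fa F) by (intros x Hx; apply nodup_In, in_or_app; auto).
 assert (incl Fb F) by (intros x Hx; apply nodup_In, in_or_app; auto).
 specialize (HFa F H H0). specialize (HFb F H H1).
 assert (Cminus a b = Cminus (Cminus (lsum f F) b) (Cminus (lsum f F) a)) by ring.
 assert (Cmod (Cminus a b) <= Cmod (Cminus (lsum f F) b) + Cmod (Cminus (lsum f F) a)).
 { rewrite H2. unfold Cminus at 1. eapply Rle_trans. apply Cmod_triangle.
   rewrite Cmod_opp. lra. }
 unfold e in *; lra. Qed.

Lemma RtoC_conj r : Cconj (RtoC r) = RtoC r.
Proof. apply injective_projections; simpl; ring. Qed.

Lemma Re_minus (a b : C) : Re (Cminus a b) = Re a - Re b.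
Proof. destruct a, b. unfold Cminus, Cplus, Copp, Re; simpl. ring. Qed.

Lemma Im_minus (a b : C) : Im (Cminus a b) = Im a - Im b.
Proof. destruct a, b. unfold Cminus, Cplus, Copp, Im; simpl. ring. Qed.

Lemma im_le_Cmod (c : C) : Rabs (Im c) <= Cmod c.
Proof. pose proof (Rmax_Cmod c). pose proof (Rmax_r (Rabs (fst c)) (Rabs (snd c))). unfold Im; lra. Qed.

Lemma has_sum_plus {I} (f g : I -> C) a b : has_sum f a -> has_sum g b ->
  has_sum (fun x => Cplus (f x) (g x)) (Cplus a b).
Proof. intros Ha Hb e He. destruct (Ha (e/2)) as [Fa HFa]. lra. destruct (Hb (e/2)) as [Fb HFb]. lra.
 exists (Fa ++ Fb). intros F HF Hi.
 assert (incl Fa F) by (intros x Hx; apply Hi, in_or_app; auto).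
 assert (incl Fb F) by (intros x Hx; apply Hi, in_or_app; auto).
 specialize (HFa F HF H). specialize (HFb F HF H0). rewrite lsum_plus.
 replace (Cminus (Cplus (lsum f F) (lsum g F)) (Cplus a b)) with (Cplus (Cminus (lsum f F) a) (Cminus (lsum g F) b)) by ring.
 eapply Rle_lt_trans. apply Cmod_triangle. lra. Qed.

Lemma has_sum_scal {I} (c : C) (f : I -> C) a : has_sum f a ->
  has_sum (fun x => Cmult c (f x)) (Cmult c a).
Proof. intros Ha e He. destruct (Ha (e / (Cmod c + 1))) as [F0 H0].
 apply Rdiv_lt_0_compat; auto. pose proof (Cmod_ge_0 c); lra.
 exists F0. intros F HF Hi. specialize (H0 F HF Hi). rewrite lsum_scal.
 replace (Cminus (Cmult c (lsum f F)) (Cmult c a)) with (Cmult c (Cminus (lsum f F) a)) by ring.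
 rewrite Cmod_mult. pose proof (Cmod_ge_0 c). pose proof (Cmod_ge_0 (Cminus (lsum f F) a)).
 apply (Rmult_lt_compat_l (Cmod c + 1)) in H0; [|lra].
 replace ((Cmod c + 1) * (e / (Cmod c + 1))) with e in H0 by (field; lra). nra. Qed.

Lemma has_sum_ext {I} (f g : I -> C) a : (forall x, f x = g x) -> has_sum f a -> has_sum g a.
Proof. intros H. replace g with f; auto. apply functional_extensionality; auto. Qed.

Lemma has_sum_zero {I} : has_sum (fun _ : I => RtoC 0) (RtoC 0).
Proof. intros e He. exists nil. intros F _ _. rewrite lsum_zero; auto.
 replace (Cminus (RtoC 0) (RtoC 0)) with (RtoC 0) by ring. rewrite Cmod_0; auto. Qed.

Lemma has_sum_single {I} (dec : forall x y : I, {x = y} + {x <> y}) (f : I -> C) x0 :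
  (forall x, x <> x0 -> f x = RtoC 0) -> has_sum f (f x0).
Proof. intros H e He. exists (x0 :: nil). intros F HF Hi.
 destruct (nodup_split dec (x0::nil) F) as [R [HP [HR _]]]; auto. constructor; auto. constructor.
 rewrite (lsum_perm _ _ _ HP), lsum_app, (lsum_zero f R). rewrite lsum_cons, lsum_nil.
 replace (Cminus (Cplus (Cplus (f x0) (RtoC 0)) (RtoC 0)) (f x0)) with (RtoC 0) by ring. rewrite Cmod_0; auto.
 intros x Hx. apply H. intro; subst. apply HR in Hx. destruct Hx as [_ Hx]; apply Hx; simpl; auto. Qed.

Lemma has_sum_lsum {I J} (h : J -> I -> C) (s : J -> C) (L : list J) :
  (forall j, In j L -> has_sum (h j) (s j)) ->
  has_sum (fun i => lsum (fun j => h j i) L) (lsum s L).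
Proof. induction L; intros H.
 - apply has_sum_ext with (fun _ => RtoC 0). intros; reflexivity. apply has_sum_zero.
 - apply has_sum_ext with (fun i => Cplus (h a i) (lsum (fun j => h j i) L)). intros; reflexivity.
   rewrite lsum_cons. apply has_sum_plus. apply H; simpl; auto. apply IHL; intros; apply H; simpl; auto. Qed.

Lemma has_sum_bound {I} (dec : forall x y : I, {x = y} + {x <> y}) (f : I -> C) s M :
  has_sum f s -> (forall F, NoDup F -> Cmod (lsum f F) <= M) -> Cmod s <= M.
Proof. intros Hs HM. apply Rnot_lt_le; intros Hlt.
 destruct (Hs (Cmod s - M)) as [F0 H0]. lra.
 specialize (H0 (nodup dec F0) (NoDup_nodup _ _) (fun x Hx => proj2 (nodup_In _ _ _) Hx)).
 specialize (HM (nodup dec F0) (NoDup_nodup _ _)).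
 assert (Cmod s <= Cmod (lsum f (nodup dec F0)) + Cmod (Cminus (lsum f (nodup dec F0)) s)).
 { replace s with (Cminus (lsum f (nodup dec F0)) (Cminus (lsum f (nodup dec F0)) s)) at 1 by ring.
   unfold Cminus at 1. eapply Rle_trans. apply Cmod_triangle. rewrite Cmod_opp. lra. }
 lra. Qed.

Lemma has_sum_re_bound {I} (dec : forall x y : I, {x = y} + {x <> y}) (f : I -> C) s M :
  has_sum f s -> (forall F, NoDup F -> Re (lsum f F) <= M) -> Re s <= M.
Proof. intros Hs HM. apply Rnot_lt_le; intros Hlt.
 destruct (Hs (Re s - M)) as [F0 H0]. lra.
 specialize (H0 (nodup dec F0) (NoDup_nodup _ _) (fun x Hx => proj2 (nodup_In _ _ _) Hx)).
 specialize (HM (nodup dec F0) (NoDup_nodup _ _)).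
 pose proof (re_le_Cmod (Cminus (lsum f (nodup dec F0)) s)).
 assert (Re (Cminus (lsum f (nodup dec F0)) s) = Re (lsum f (nodup dec F0)) - Re s) by apply Re_minus.
 rewrite H1 in H. apply Rabs_le_between in H. lra. Qed.

Lemma has_sum_re_lbound {I} (dec : forall x y : I, {x = y} + {x <> y}) (f : I -> C) s M :
  has_sum f s -> (forall F, NoDup F -> M <= Re (lsum f F)) -> M <= Re s.
Proof. intros Hs HM. apply Rnot_lt_le; intros Hlt.
 destruct (Hs (M - Re s)) as [F0 H0]. lra.
 specialize (H0 (nodup dec F0) (NoDup_nodup _ _) (fun x Hx => proj2 (nodup_In _ _ _) Hx)).
 specialize (HM (nodup dec F0) (NoDup_nodup _ _)).
 pose proof (re_le_Cmod (Cminus (lsum f (nodup dec F0)) s)).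
 assert (Re (Cminus (lsum f (nodup dec F0)) s) = Re (lsum f (nodup dec F0)) - Re s) by apply Re_minus.
 rewrite H1 in H. apply Rabs_le_between in H. lra. Qed.

Lemma has_sum_im0 {I} (dec : forall x y : I, {x = y} + {x <> y}) (f : I -> C) s :
  has_sum f s -> (forall F, NoDup F -> Im (lsum f F) = 0) -> Im s = 0.
Proof. intros Hs HM. apply Rabs_eq_0, Rle_antisym; [|apply Rabs_pos]. apply Rnot_lt_le; intros Hlt.
 destruct (Hs (Rabs (Im s))) as [F0 H0]. lra.
 specialize (H0 (nodup dec F0) (NoDup_nodup _ _) (fun x Hx => proj2 (nodup_In _ _ _) Hx)).
 specialize (HM (nodup dec F0) (NoDup_nodup _ _)).
 pose proof (im_le_Cmod (Cminus (lsum f (nodup dec F0)) s)).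
 assert (Im (Cminus (lsum f (nodup dec F0)) s) = Im (lsum f (nodup dec F0)) - Im s) by apply Im_minus.
 rewrite H1, HM in H. replace (0 - Im s) with (- Im s) in H by ring. rewrite Rabs_Ropp in H. lra. Qed.

Lemma C_real (z : C) : Im z = 0 -> z = RtoC (Re z).
Proof. destruct z as [x y]. unfold Re, Im, RtoC; simpl. intros ->; auto. Qed.

Lemma has_sum_nonneg_le {I} (dec : forall x y : I, {x = y} + {x <> y}) (g : I -> R) s :
  (forall x, 0 <= g x) -> has_sum (fun x => RtoC (g x)) s ->
  Im s = 0 /\ forall F, NoDup F -> rsum g F <= Re s.
Proof. intros Hg Hs. split.
 - apply (has_sum_im0 dec _ _ Hs). intros F _. rewrite lsum_RtoC; reflexivity.
 - intros F HF. apply Rnot_lt_le; intros Hlt.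
   destruct (Hs (rsum g F - Re s)) as [F0 H0]. lra.
   set (G := nodup dec (F ++ F0)).
   assert (NoDup G) by apply NoDup_nodup.
   assert (incl F0 G) by (intros x Hx; apply nodup_In, in_or_app; auto).
   specialize (H0 G H H1). rewrite lsum_RtoC in H0.
   assert (rsum g F <= rsum g G). { apply rsum_le_incl; auto. intros x Hx _. apply nodup_In, in_or_app; auto. }
   pose proof (re_le_Cmod (Cminus (RtoC (rsum g G)) s)).
   assert (Re (Cminus (RtoC (rsum g G)) s) = rsum g G - Re s) by apply Re_minus.
   rewrite H4 in H3. apply Rabs_le_between in H3. lra. Qed.

Lemma has_sum_sup {I} (g : I -> R) M :
  (forall x, 0 <= g x) -> (forall F, NoDup F -> rsum g F <= M) ->
  exists s, has_sum (fun x => RtoC (g x)) (RtoC s) /\ 0 <= s <= M /\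
    (forall F, NoDup F -> rsum g F <= s).
Proof. intros Hg HM.
 set (E := fun r => exists F, NoDup F /\ r = rsum g F).
 assert (Hb : bound E) by (exists M; intros r [F [HF ->]]; auto).
 assert (He : exists r, E r) by (exists 0; exists nil; split; [constructor|reflexivity]).
 destruct (completeness E Hb He) as [s [Hs1 Hs2]].
 assert (Hup : forall F, NoDup F -> rsum g F <= s) by (intros F HF; apply Hs1; exists F; auto).
 exists s. split; [|split; [split|]]; auto.
 - intros e Hpos. assert (exists F, NoDup F /\ s - e < rsum g F).
   { apply NNPP; intros Hn. assert (s <= s - e); [|lra]. apply Hs2. intros r [F [HF ->]].
     apply Rnot_lt_le; intros Hl. apply Hn; eauto. }
   destruct H as [F0 [HF0 Hlt]]. exists F0. intros F HF Hi.
   assert (rsum g F0 <= rsum g F) by (apply rsum_le_incl; auto).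
   specialize (Hup F HF). rewrite lsum_RtoC, <- RtoC_minus, Cmod_R. apply Rabs_def1; lra.
 - specialize (Hup nil (NoDup_nil _)). unfold rsum in Hup; simpl in Hup; lra.
 - apply Hs2. intros r [F [HF ->]]; auto. Qed.

Lemma has_sum_nonneg_tail {I} (dec : forall x y : I, {x = y} + {x <> y}) (g : I -> R) s :
  (forall x, 0 <= g x) -> has_sum (fun x => RtoC (g x)) s ->
  forall e, 0 < e -> exists F0, forall G, NoDup G -> (forall x, In x G -> ~ In x F0) -> rsum g G < e.
Proof. intros Hg Hs e He. destruct (has_sum_nonneg_le dec g s Hg Hs) as [_ Hle].
 destruct (Hs e He) as [F0 H0]. set (F1 := nodup dec F0). exists F1. intros G HG Hd.
 specialize (H0 F1 (NoDup_nodup _ _) (fun x Hx => proj2 (nodup_In _ _ _) Hx)).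
 rewrite lsum_RtoC in H0.
 pose proof (re_le_Cmod (Cminus (RtoC (rsum g F1)) s)).
 assert (Re (Cminus (RtoC (rsum g F1)) s) = rsum g F1 - Re s) by apply Re_minus.
 rewrite H1 in H. apply Rabs_le_between in H.
 assert (rsum g (G ++ F1) <= Re s). { apply Hle. apply NoDup_app; auto. apply NoDup_nodup. }
 rewrite rsum_app in H2. lra. Qed.

Lemma Cmod_sq_ge (z : C) : 0 <= Cmod z ^ 2.
Proof. pose proof (Cmod_ge_0 z); nra. Qed.

Lemma has_sum_compare {I} (f : I -> C) (g : I -> R) M :
  (forall x, Cmod (f x) <= g x) -> (forall F, NoDup F -> rsum g F <= M) ->
  exists s, has_sum f s.
Proof. intros Hfg HM.
 assert (Hg : forall x, 0 <= g x) by (intro x; pose proof (Cmod_ge_0 (f x)); specialize (Hfg x); lra).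
 assert (Aux : forall h : I -> R, (forall x, 0 <= h x <= g x) -> exists s, has_sum (fun x => RtoC (h x)) s).
 { intros h Hh. destruct (has_sum_sup h M) as [s [Hs _]]. intros; apply Hh.
   intros F HF. eapply Rle_trans; [|apply (HM F HF)]. apply rsum_le. intros; apply Hh.
   eauto. }
 destruct (Aux (fun x => Rmax (Re (f x)) 0)) as [s1 H1].
 { intros x. pose proof (re_le_Cmod (f x)). specialize (Hfg x). split. apply Rmax_r.
   apply Rmax_lub. apply Rabs_le_between in H; lra. auto. }
 destruct (Aux (fun x => Rmax (- Re (f x)) 0)) as [s2 H2].
 { intros x. pose proof (re_le_Cmod (f x)). specialize (Hfg x). split. apply Rmax_r.
   apply Rmax_lub. apply Rabs_le_between in H; lra. auto. }
 destruct (Aux (fun x => Rmax (Im (f x)) 0)) as [s3 H3].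
 { intros x. pose proof (im_le_Cmod (f x)). specialize (Hfg x). split. apply Rmax_r.
   apply Rmax_lub. apply Rabs_le_between in H; lra. auto. }
 destruct (Aux (fun x => Rmax (- Im (f x)) 0)) as [s4 H4].
 { intros x. pose proof (im_le_Cmod (f x)). specialize (Hfg x). split. apply Rmax_r.
   apply Rmax_lub. apply Rabs_le_between in H; lra. auto. }
 exists (Cplus (Cplus s1 (Cmult (RtoC (-1)) s2)) (Cmult Ci (Cplus s3 (Cmult (RtoC (-1)) s4)))).
 apply has_sum_ext with (fun x => Cplus (Cplus (RtoC (Rmax (Re (f x)) 0)) (Cmult (RtoC (-1)) (RtoC (Rmax (- Re (f x)) 0)))) (Cmult Ci (Cplus (RtoC (Rmax (Im (f x)) 0)) (Cmult (RtoC (-1)) (RtoC (Rmax (- Im (f x)) 0)))))).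
 - intros x. destruct (f x) as [a b]. unfold Re, Im. simpl.
   apply injective_projections; simpl; unfold Rmax; repeat destruct Rle_dec; lra.
 - apply has_sum_plus. apply has_sum_plus. exact H1. apply has_sum_scal; exact H2.
   apply has_sum_scal. apply has_sum_plus; [exact H3|]. apply has_sum_scal; exact H4.
Qed.

Lemma NoDup_map_inj {A B} (h : A -> B) (l : list A) :
  (forall x y, h x = h y -> x = y) -> NoDup l -> NoDup (map h l).
Proof. intros Hi; induction 1; simpl; constructor; auto.
 intros Hin. apply in_map_iff in Hin. destruct Hin as [y [Hy Hy']]. apply Hi in Hy; subst; auto. Qed.

Lemma rsum_map {A B} (g : B -> R) (h : A -> B) l : rsum g (map h l) = rsum (fun x => g (h x)) l.
Proof. unfold rsum; rewrite map_map; reflexivity. Qed.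

Lemma lsum_map {A B} (g : B -> C) (h : A -> B) l : lsum g (map h l) = lsum (fun x => g (h x)) l.
Proof. unfold lsum; rewrite map_map; reflexivity. Qed.

Lemma NoDup_list_prod {A B} (F : list A) (G : list B) : NoDup F -> NoDup G -> NoDup (list_prod F G).
Proof. intros HF HG; induction HF; simpl. constructor.
 apply NoDup_app; auto. apply NoDup_map_inj; auto. intros a b H'; inversion H'; auto.
 intros p Hp Hp'. apply in_map_iff in Hp. destruct Hp as [y [<- _]]. apply in_prod_iff in Hp'. tauto. Qed.

Lemma rsum_prod {A B} (h : A -> B -> R) F G :
  rsum (fun p => h (fst p) (snd p)) (list_prod F G) = rsum (fun i => rsum (fun m => h i m) G) F.
Proof. induction F; simpl. reflexivity. rewrite rsum_app, rsum_map, IHF, rsum_cons. reflexivity. Qed.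

Lemma lsum_prod {A B} (h : A -> B -> C) F G :
  lsum (fun p => h (fst p) (snd p)) (list_prod F G) = lsum (fun i => lsum (fun m => h i m) G) F.
Proof. induction F; simpl. reflexivity. rewrite lsum_app, lsum_map, IHF, lsum_cons. reflexivity. Qed.

Lemma rsum_comm {A B} (h : A -> B -> R) F G :
  rsum (fun i => rsum (fun m => h i m) G) F = rsum (fun m => rsum (fun i => h i m) F) G.
Proof. induction F; simpl.
 - unfold rsum at 1; simpl. symmetry; apply rsum_zero; intros; reflexivity.
 - rewrite rsum_cons, IHF. rewrite <- rsum_plus. apply rsum_ext. intros; rewrite rsum_cons; reflexivity. Qed.

Lemma lsum_comm {A B} (h : A -> B -> C) F G :
  lsum (fun i => lsum (fun m => h i m) G) F = lsum (fun m => lsum (fun i => h i m) F) G.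
Proof. induction F; simpl.
 - rewrite lsum_nil. symmetry; apply lsum_zero; intros; reflexivity.
 - rewrite lsum_cons, IHF. rewrite <- lsum_plus. apply lsum_ext. intros; rewrite lsum_cons; reflexivity. Qed.

Definition nat_pair_dec : forall x y : nat * nat, {x = y} + {x <> y}.
Proof. decide equality; apply Nat.eq_dec. Defined.

Lemma pairs_bound {A B} (decA : forall x y : A, {x = y} + {x <> y}) (decB : forall x y : B, {x = y} + {x <> y})
  (g : A * B -> R) M :
  (forall x, 0 <= g x) ->
  (forall Fi Fm, NoDup Fi -> NoDup Fm -> rsum (fun i => rsum (fun m => g (i, m)) Fm) Fi <= M) ->
  forall G, NoDup G -> rsum g G <= M.
Proof. intros Hg HM G HG.
 set (Fi := nodup decA (map fst G)). set (Fm := nodup decB (map snd G)).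
 eapply Rle_trans; [|apply (HM Fi Fm (NoDup_nodup _ _) (NoDup_nodup _ _))].
 rewrite <- (rsum_prod (fun i m => g (i,m))).
 replace (fun p : A * B => g (fst p, snd p)) with g by (apply functional_extensionality; intros [x y]; reflexivity).
 apply rsum_le_incl; auto. intros [i m] Hx _. simpl. apply in_prod_iff; split; apply nodup_In.
 - change i with (fst (i,m)); apply in_map; auto.
 - change m with (snd (i,m)); apply in_map; auto. Qed.

Lemma pairs_row {A B} (g : A * B -> R) M i (Fm : list B) :
  (forall G, NoDup G -> rsum g G <= M) -> NoDup Fm -> rsum (fun m => g (i, m)) Fm <= M.
Proof. intros H HF. rewrite <- (rsum_map g (fun m => (i,m))). apply H.
 apply NoDup_map_inj; auto. intros x y E; inversion E; auto. Qed.

Lemma pairs_col {A B} (g : A * B -> R) M m (Fi : list A) :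
  (forall G, NoDup G -> rsum g G <= M) -> NoDup Fi -> rsum (fun i => g (i, m)) Fi <= M.
Proof. intros H HF. rewrite <- (rsum_map g (fun i => (i,m))). apply H.
 apply NoDup_map_inj; auto. intros x y E; inversion E; auto. Qed.

Lemma pairs_prod {A B} (g : A * B -> R) M (Fi : list A) (Fm : list B) :
  (forall G, NoDup G -> rsum g G <= M) -> NoDup Fi -> NoDup Fm ->
  rsum (fun i => rsum (fun m => g (i, m)) Fm) Fi <= M.
Proof. intros H H1 H2. rewrite <- (rsum_prod (fun i m => g (i,m))).
 replace (fun p : A * B => g (fst p, snd p)) with g. apply H. apply NoDup_list_prod; auto.
 apply functional_extensionality; intros [x y]; reflexivity. Qed.

(** * Square-summable families and trace-class operators *)

(* [hsum f] is the sum of [f] when it exists, and an arbitrary value otherwise. *)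
Definition hsum {I} (f : I -> C) : C := epsilon (inhabits (RtoC 0)) (fun s => has_sum f s).
Lemma hsum_spec {I} (f : I -> C) : (exists s, has_sum f s) -> has_sum f (hsum f).
Proof. intros H. unfold hsum. apply epsilon_spec. exact H. Qed.

Lemma Cmod_mult_conj_le (x y : C) : Cmod (Cmult x (Cconj y)) <= (Cmod x ^ 2 + Cmod y ^ 2) / 2.
Proof. rewrite Cmod_mult, Cmod_conj. pose proof (pow2_ge_0 (Cmod x - Cmod y)). simpl in *. nra. Qed.

(* [a i m] is the [m]-th coordinate of the [i]-th vector [a_i]; [sq_bounded a A] says [sum_i |a_i|^2 <= A]
   and [dyad_sum a b] is the operator [sum_i |a_i><b_i|]. *)
Definition sq_bounded (a : nat -> nat -> C) (A : R) : Prop :=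
  forall G : list (nat * nat), NoDup G -> rsum (fun p => Cmod (a (fst p) (snd p)) ^ 2) G <= A.

Definition dyad_sum (a b : nat -> nat -> C) : op := fun m n => hsum (fun i => Cmult (a i m) (Cconj (b i n))).

Lemma sq_bounded_row a A i F : sq_bounded a A -> NoDup F -> rsum (fun m => Cmod (a i m) ^ 2) F <= A.
Proof. intros H HF. apply (pairs_row (fun p => Cmod (a (fst p) (snd p)) ^ 2) A i F H HF). Qed.

Lemma sq_bounded_col a A m F : sq_bounded a A -> NoDup F -> rsum (fun i => Cmod (a i m) ^ 2) F <= A.
Proof. intros H HF. apply (pairs_col (fun p => Cmod (a (fst p) (snd p)) ^ 2) A m F H HF). Qed.

Lemma sq_bounded_ge0 a A : sq_bounded a A -> 0 <= A.
Proof. intros H. specialize (H nil (NoDup_nil _)). unfold rsum in H; simpl in H; lra. Qed.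

Lemma dyad_sum_has_sum a b A B m n : sq_bounded a A -> sq_bounded b B ->
  has_sum (fun i => Cmult (a i m) (Cconj (b i n))) (dyad_sum a b m n).
Proof. intros Ha Hb. apply hsum_spec.
 apply (has_sum_compare _ (fun i => (Cmod (a i m) ^ 2 + Cmod (b i n) ^ 2) / 2) ((A + B) / 2)).
 - intros; apply Cmod_mult_conj_le.
 - intros F HF. unfold Rdiv. rewrite (rsum_ext _ (fun i => /2 * (Cmod (a i m) ^ 2 + Cmod (b i n) ^ 2))) by (intros; ring).
   rewrite rsum_scal, rsum_plus. pose proof (sq_bounded_col a A m F Ha HF). pose proof (sq_bounded_col b B n F Hb HF). lra. Qed.

Definition row_norm2 (a : nat -> nat -> C) i : R := Re (hsum (fun m => RtoC (Cmod (a i m) ^ 2))).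

Lemma row_norm2_spec a A i : sq_bounded a A ->
  has_sum (fun m => RtoC (Cmod (a i m) ^ 2)) (RtoC (row_norm2 a i)) /\ 0 <= row_norm2 a i /\
  (forall F, NoDup F -> rsum (fun m => Cmod (a i m) ^ 2) F <= row_norm2 a i).
Proof. intros Ha.
 destruct (has_sum_sup (fun m => Cmod (a i m) ^ 2) A) as [s [Hs _]].
 intros; apply Cmod_sq_ge. intros F HF; apply (sq_bounded_row a A i F Ha HF).
 assert (H := hsum_spec _ (ex_intro _ _ Hs)).
 destruct (has_sum_nonneg_le Nat.eq_dec _ _ (fun m => Cmod_sq_ge (a i m)) H) as [Him Hle].
 unfold row_norm2. rewrite <- (C_real _ Him). split; auto. split; auto.
 specialize (Hle nil (NoDup_nil _)). change (rsum (fun m => Cmod (a i m) ^ 2) nil) with 0 in Hle. lra. Qed.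

Lemma row_norm2_sum a A F : sq_bounded a A -> NoDup F -> rsum (row_norm2 a) F <= A.
Proof. intros Ha HF.
 assert (H : has_sum (fun m => lsum (fun i => RtoC (Cmod (a i m) ^ 2)) F) (lsum (fun i => RtoC (row_norm2 a i)) F)).
 { apply has_sum_lsum. intros; apply (row_norm2_spec a A j Ha). }
 rewrite lsum_RtoC in H. replace (rsum (row_norm2 a) F) with (Re (RtoC (rsum (row_norm2 a) F))) by reflexivity.
 apply (has_sum_re_bound Nat.eq_dec _ _ _ H). intros G HG.
 rewrite (lsum_ext _ (fun m => RtoC (rsum (fun i => Cmod (a i m) ^ 2) F))) by (intros; apply lsum_RtoC).
 rewrite lsum_RtoC. simpl. rewrite <- rsum_comm.
 apply (pairs_prod (fun p => Cmod (a (fst p) (snd p)) ^ 2) A F G Ha HF HG). Qed.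

Lemma sqrt_mult_le x y : 0 <= x -> 0 <= y -> sqrt x * sqrt y <= (x + y) / 2.
Proof. intros Hx Hy. pose proof (pow2_ge_0 (sqrt x - sqrt y)). pose proof (sqrt_sqrt x Hx). pose proof (sqrt_sqrt y Hy).
 simpl in *. nra. Qed.

Lemma dyad_sum_tc a b A B : sq_bounded a A -> sq_bounded b B -> trace_class (dyad_sum a b).
Proof. intros Ha Hb.
 assert (Hex : exists t, has_sum (fun i => RtoC (sqrt (row_norm2 a i) * sqrt (row_norm2 b i))) t).
 { apply (has_sum_compare _ (fun i => (row_norm2 a i + row_norm2 b i) / 2) ((A + B) / 2)).
   - intros i. destruct (row_norm2_spec a A i Ha) as [_ [Ha0 _]]. destruct (row_norm2_spec b B i Hb) as [_ [Hb0 _]].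
     rewrite Cmod_R, Rabs_pos_eq. apply sqrt_mult_le; auto. apply Rmult_le_pos; apply sqrt_pos.
   - intros F HF. unfold Rdiv. rewrite (rsum_ext _ (fun i => /2 * (row_norm2 a i + row_norm2 b i))) by (intros; ring).
     rewrite rsum_scal, rsum_plus. pose proof (row_norm2_sum a A F Ha HF). pose proof (row_norm2_sum b B F Hb HF). lra. }
 destruct Hex as [t Ht].
 exists a, b, (fun i => sqrt (row_norm2 a i)), (fun i => sqrt (row_norm2 b i)), t. split; [|split].
 - intros i. destruct (row_norm2_spec a A i Ha) as [H1 [H2 _]]. destruct (row_norm2_spec b B i Hb) as [H3 [H4 _]].
   split; split; try apply sqrt_pos; rewrite pow2_sqrt; auto.
 - exact Ht.
 - intros m n. apply (dyad_sum_has_sum a b A B m n Ha Hb). Qed.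

Lemma is_l2_zero psi m : is_l2 psi 0 -> psi m = RtoC 0.
Proof. intros [_ H]. destruct (has_sum_nonneg_le Nat.eq_dec _ _ (fun m => Cmod_sq_ge (psi m)) H) as [_ Hle].
 specialize (Hle (m :: nil) (NoDup_cons m (@in_nil _ m) (NoDup_nil _))).
 rewrite rsum_cons, re_RtoC in Hle. change (rsum (fun m : nat => Cmod (psi m) ^ 2) nil) with 0 in Hle.
 replace (0 ^ 2) with 0 in Hle by ring.
 apply Cmod_eq_0. pose proof (Cmod_ge_0 (psi m)). nra. Qed.

Lemma is_l2_bound psi r F : is_l2 psi r -> NoDup F -> rsum (fun m => Cmod (psi m) ^ 2) F <= r ^ 2.
Proof. intros [_ H] HF. destruct (has_sum_nonneg_le Nat.eq_dec _ _ (fun m => Cmod_sq_ge (psi m)) H) as [_ Hle].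
 apply Hle; auto. Qed.

Lemma Cmod_RtoC_mult_sq (l : R) (z : C) : Cmod (Cmult (RtoC l) z) ^ 2 = l ^ 2 * Cmod z ^ 2.
Proof. rewrite Cmod_mult, Cmod_R. rewrite <- (pow2_abs l). ring. Qed.

Definition balance (x y : R) : R := if Rlt_dec 0 (x * y) then sqrt (y / x) else 0.

Lemma balance_sq x y : 0 <= x -> 0 <= y -> balance x y ^ 2 * x ^ 2 <= x * y.
Proof. intros Hx Hy. unfold balance. destruct (Rlt_dec 0 (x * y)) as [Hp|Hp]; [|simpl; nra].
 assert (0 < x) by nra. rewrite pow2_sqrt by (apply Rdiv_le_0_compat; lra). right; field; lra. Qed.

Lemma balance_mult x y : 0 < x -> 0 < y -> balance x y * balance y x = 1.
Proof. intros Hx Hy. unfold balance.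
 destruct (Rlt_dec 0 (x * y)); [|nra]. destruct (Rlt_dec 0 (y * x)); [|nra].
 rewrite <- sqrt_mult by (apply Rdiv_le_0_compat; lra). replace (y / x * (x / y)) with 1 by (field; lra).
 apply sqrt_1. Qed.

Lemma sq_bounded_rescaled (u : nat -> nat -> C) (nu lam : nat -> R) M :
  (forall i, is_l2 (u i) (nu i)) -> (forall F, NoDup F -> rsum (fun i => lam i ^ 2 * nu i ^ 2) F <= M) ->
  sq_bounded (fun i m => Cmult (RtoC (lam i)) (u i m)) M.
Proof. intros Hu HM G HG.
 apply (pairs_bound Nat.eq_dec Nat.eq_dec (fun p => Cmod (Cmult (RtoC (lam (fst p))) (u (fst p) (snd p))) ^ 2)); auto.
 { intros; apply Cmod_sq_ge. }
 intros Fi Fm HFi HFm. simpl. eapply Rle_trans; [|apply (HM Fi HFi)]. apply rsum_le. intros i _.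
 rewrite (rsum_ext _ (fun m => lam i ^ 2 * Cmod (u i m) ^ 2)) by (intros; apply Cmod_RtoC_mult_sq).
 rewrite rsum_scal. pose proof (is_l2_bound (u i) (nu i) Fm (Hu i) HFm). pose proof (pow2_ge_0 (lam i)). nra. Qed.

(* A nuclear decomposition [X = sum_i |u_i><v_i|] is rebalanced to [|a_i><b_i|] with [|a_i| = |b_i|],
   so that [sum_i |a_i|^2] and [sum_i |b_i|^2] are both bounded by [sum_i |u_i| |v_i|]. *)
Lemma trace_class_dyad_sum X : trace_class X ->
  exists a b A B, sq_bounded a A /\ sq_bounded b B /\ X = dyad_sum a b.
Proof. intros [u [v [nu [nv [t [Hl2 [Ht Hent]]]]]]].
 set (a := fun i m => Cmult (RtoC (balance (nu i) (nv i))) (u i m)).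
 set (b := fun i m => Cmult (RtoC (balance (nv i) (nu i))) (v i m)).
 assert (Hnu : forall i, 0 <= nu i) by (intros i; apply (Hl2 i)).
 assert (Hnv : forall i, 0 <= nv i) by (intros i; apply (Hl2 i)).
 assert (Hprod : forall i m n, Cmult (a i m) (Cconj (b i n)) = Cmult (u i m) (Cconj (v i n))).
 { intros i m n. unfold a, b. rewrite Cmult_conj, RtoC_conj.
   destruct (Req_dec (nu i) 0) as [Z|Z].
   - destruct (Hl2 i) as [[_ Hu] _]. rewrite Z in Hu.
     rewrite (is_l2_zero (u i) m (conj (Rle_refl 0) Hu)). ring.
   - destruct (Req_dec (nv i) 0) as [Z'|Z'].
     + destruct (Hl2 i) as [_ [_ Hv]]. rewrite Z' in Hv.
       rewrite (is_l2_zero (v i) n (conj (Rle_refl 0) Hv)), RtoC_conj. ring.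
     + pose proof (Hnu i). pose proof (Hnv i).
       transitivity (Cmult (RtoC (balance (nu i) (nv i) * balance (nv i) (nu i))) (Cmult (u i m) (Cconj (v i n)))).
       * rewrite RtoC_mult. ring.
       * rewrite balance_mult by lra. ring. }
 destruct (has_sum_nonneg_le Nat.eq_dec _ _ (fun i => Rmult_le_pos _ _ (Hnu i) (Hnv i)) Ht) as [_ Htle].
 exists a, b, (Re t), (Re t). split; [|split].
 - apply sq_bounded_rescaled with nu; [intros; apply Hl2|]. intros F HF.
   eapply Rle_trans; [|apply (Htle F HF)]. apply rsum_le. intros i _. apply balance_sq; auto.
 - apply sq_bounded_rescaled with nv; [intros; apply Hl2|]. intros F HF.
   eapply Rle_trans; [|apply (Htle F HF)]. apply rsum_le. intros i _.
   rewrite (Rmult_comm (nu i)). apply balance_sq; auto.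
 - apply functional_extensionality; intros m. apply functional_extensionality; intros n.
   unfold dyad_sum. apply (has_sum_unique Nat.eq_dec (fun i => Cmult (a i m) (Cconj (b i n)))).
   + apply has_sum_ext with (fun i => Cmult (u i m) (Cconj (v i n))); [intros; symmetry; apply Hprod|apply Hent].
   + apply hsum_spec. exists (X m n).
     apply has_sum_ext with (fun i => Cmult (u i m) (Cconj (v i n))); [intros; symmetry; apply Hprod|apply Hent]. Qed.

Lemma fsum_lsum N f : fsum N f = lsum f (seq 0 N).
Proof. induction N. reflexivity. simpl fsum. rewrite seq_S, lsum_app, IHN. rewrite lsum_cons, lsum_nil.
 simpl. ring. Qed.

Lemma lsum_single {I} (dec : forall x y : I, {x = y} + {x <> y}) (f : I -> C) L x0 :
  NoDup L -> (forall x, In x L -> x <> x0 -> f x = RtoC 0) ->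
  lsum f L = if in_dec dec x0 L then f x0 else RtoC 0.
Proof. intros HL Hf. destruct (in_dec dec x0 L) as [Hin|Hin].
 - destruct (nodup_split dec (x0 :: nil) L) as [R [HP [HR _]]]; auto.
   constructor; auto. constructor. intros y Hy; destruct Hy as [<-|[]]; auto.
   rewrite (lsum_perm _ _ _ HP), lsum_app, lsum_cons, lsum_nil, (lsum_zero f R). ring.
   intros x Hx. destruct (HR x Hx) as [H1 H2]. apply Hf; auto. intros ->; apply H2; simpl; auto.
 - apply lsum_zero. intros x Hx. apply Hf; auto. intros ->; contradiction. Qed.

Lemma fsum_single N f m0 : (forall m, (m < N)%nat -> m <> m0 -> f m = RtoC 0) ->
  fsum N f = if Nat.ltb m0 N then f m0 else RtoC 0.
Proof. intros H. rewrite fsum_lsum, (lsum_single Nat.eq_dec f _ m0).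
 - destruct (in_dec Nat.eq_dec m0 (seq 0 N)) as [Hi|Hi]; apply in_seq in Hi || idtac;
   destruct (Nat.ltb_spec m0 N); auto; exfalso.
   + lia.
   + apply Hi, in_seq; lia.
 - apply seq_NoDup.
 - intros x Hx. apply in_seq in Hx. apply H. lia. Qed.

Lemma fsum_ext N f g : (forall m, (m < N)%nat -> f m = g m) -> fsum N f = fsum N g.
Proof. induction N; intros H; simpl; auto. rewrite IHN, H; auto. Qed.

Lemma fsum_zero N f : (forall m, (m < N)%nat -> f m = RtoC 0) -> fsum N f = RtoC 0.
Proof. intros H. rewrite (fsum_ext N f (fun _ => RtoC 0)); auto. clear H. induction N; simpl; auto. rewrite IHN; ring. Qed.

Lemma fsum_plus N f g : fsum N (fun m => Cplus (f m) (g m)) = Cplus (fsum N f) (fsum N g).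
Proof. induction N; simpl. ring. rewrite IHN; ring. Qed.

Lemma fsum_scal N a f : fsum N (fun m => Cmult a (f m)) = Cmult a (fsum N f).
Proof. induction N; simpl. ring. rewrite IHN; ring. Qed.

Lemma fsum_comm N M (h : nat -> nat -> C) :
  fsum N (fun i => fsum M (fun j => h i j)) = fsum M (fun j => fsum N (fun i => h i j)).
Proof. rewrite !fsum_lsum. rewrite (lsum_ext _ (fun i => lsum (fun j => h i j) (seq 0 M))).
 rewrite lsum_comm. apply lsum_ext. intros; symmetry; apply fsum_lsum.
 intros; apply fsum_lsum. Qed.

Lemma Cconj_sum N f : Cconj (fsum N f) = fsum N (fun m => Cconj (f m)).
Proof. induction N; simpl. apply injective_projections; simpl; ring. rewrite Cplus_conj, IHN; reflexivity. Qed.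

(** * Finitely supported operators *)

Definition zero_op : op := fun _ _ => RtoC 0.
Definition mat_unit (m0 n0 : nat) : op := fun m n => if Nat.eqb m m0 && Nat.eqb n n0 then RtoC 1 else RtoC 0.

Definition fin_support (N : nat) (X : op) : Prop := forall m n, (N <= m \/ N <= n)%nat -> X m n = RtoC 0.

Lemma rsum_sub_seq (g : nat -> R) N F : (forall x, 0 <= g x) -> (forall x, (N <= x)%nat -> g x = 0) ->
  NoDup F -> rsum g F <= rsum g (seq 0 N).
Proof. intros H0 H1 HF. apply rsum_le_incl; auto. intros x _ Hx. apply in_seq.
 destruct (Nat.lt_ge_cases x N); [lia|]. exfalso; apply Hx; auto. Qed.

Lemma fin_support_tc N X : fin_support N X -> trace_class X.
Proof. intros HX.
 set (a := fun i m => if Nat.ltb i N && Nat.eqb i m then RtoC 1 else RtoC 0).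
 set (b := fun i n => if Nat.ltb i N then Cconj (X i n) else RtoC 0).
 assert (Ha : sq_bounded a (rsum (fun _ => 1) (seq 0 N))).
 { intros G HG. apply (pairs_bound Nat.eq_dec Nat.eq_dec (fun p => Cmod (a (fst p) (snd p)) ^ 2)); auto.
   intros; apply Cmod_sq_ge. intros Fi Fm HFi HFm. simpl.
   eapply Rle_trans.
   - apply (rsum_sub_seq (fun i => rsum (fun m => Cmod (a i m) ^ 2) Fm) N); auto.
     + intros; apply rsum_nonneg; intros; apply Cmod_sq_ge.
     + intros x Hx. apply rsum_zero. intros m _. unfold a. destruct (Nat.ltb_spec x N); [lia|]. simpl. rewrite Cmod_0; ring.
   - apply rsum_le. intros i _.
     eapply Rle_trans. apply (rsum_le_incl _ _ (i :: nil)); auto. intros; apply Cmod_sq_ge.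
     intros x Hx Hn. unfold a in Hn. destruct (Nat.ltb i N && Nat.eqb i x) eqn:E.
     + apply andb_prop in E. destruct E as [_ E]. apply Nat.eqb_eq in E. subst; simpl; auto.
     + exfalso; apply Hn. rewrite Cmod_0; ring.
     + rewrite rsum_cons. change (rsum (fun m : nat => Cmod (a i m) ^ 2) nil) with 0. unfold a.
       destruct (Nat.ltb i N && Nat.eqb i i); [rewrite Cmod_1|rewrite Cmod_0]; lra. }
 assert (Hb : sq_bounded b (rsum (fun i => rsum (fun n => Cmod (X i n) ^ 2) (seq 0 N)) (seq 0 N))).
 { intros G HG. apply (pairs_bound Nat.eq_dec Nat.eq_dec (fun p => Cmod (b (fst p) (snd p)) ^ 2)); auto.
   intros; apply Cmod_sq_ge. intros Fi Fm HFi HFm. simpl.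
   eapply Rle_trans.
   - apply (rsum_sub_seq (fun i => rsum (fun m => Cmod (b i m) ^ 2) Fm) N); auto.
     + intros; apply rsum_nonneg; intros; apply Cmod_sq_ge.
     + intros x Hx. apply rsum_zero. intros m _. unfold b. destruct (Nat.ltb_spec x N); [lia|]. rewrite Cmod_0; ring.
   - apply rsum_le. intros i Hi. apply in_seq in Hi. unfold b. destruct (Nat.ltb_spec i N); [|lia].
     rewrite (rsum_ext _ (fun m => Cmod (X i m) ^ 2)) by (intros; rewrite Cmod_conj; auto).
     apply rsum_sub_seq; auto. intros; apply Cmod_sq_ge. intros x Hx. rewrite HX. rewrite Cmod_0; ring. lia. }
 replace X with (dyad_sum a b). apply (dyad_sum_tc a b _ _ Ha Hb).
 apply functional_extensionality; intros m. apply functional_extensionality; intros n.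
 apply (has_sum_unique Nat.eq_dec (fun i => Cmult (a i m) (Cconj (b i n)))). apply (dyad_sum_has_sum a b _ _ m n Ha Hb).
 apply has_sum_ext with (fun i => if Nat.eqb i m then X m n else RtoC 0).
 - intros i. unfold a, b. destruct (Nat.eqb_spec i m) as [E|E].
   + subst i. destruct (Nat.ltb_spec m N); simpl.
     * rewrite Cconj_conj. ring.
     * rewrite (HX m n) by lia. ring.
   + simpl. rewrite ?andb_false_r. ring.
 - pose proof (has_sum_single Nat.eq_dec (fun i => if Nat.eqb i m then X m n else RtoC 0) m) as Hs.
   simpl in Hs. rewrite Nat.eqb_refl in Hs. apply Hs. intros x Hx. destruct (Nat.eqb_spec x m); [contradiction|reflexivity].
Qed.

Lemma mat_unit_fin_support m0 n0 : fin_support (S (max m0 n0)) (mat_unit m0 n0).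
Proof. intros m n H. unfold mat_unit. destruct (Nat.eqb_spec m m0); destruct (Nat.eqb_spec n n0); simpl; auto; lia. Qed.

Lemma mat_unit_tc m0 n0 : trace_class (mat_unit m0 n0).
Proof. eapply fin_support_tc; apply mat_unit_fin_support. Qed.

Lemma zero_tc : trace_class zero_op.
Proof. apply (fin_support_tc 0). intros m n _; reflexivity. Qed.

Section Lin.
Variable E : op -> op.
Hypothesis Hlin : forall (a : C) X Y, trace_class X -> trace_class Y ->
     forall m n, E (op_add (op_scale a X) Y) m n = Cplus (Cmult a (E X m n)) (E Y m n).

Lemma E_zero m n : E zero_op m n = RtoC 0.
Proof. pose proof (Hlin (RtoC 1) zero_op zero_op zero_tc zero_tc m n).
 replace (op_add (op_scale (RtoC 1) zero_op) zero_op) with zero_op in H.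
 - replace (E zero_op m n) with (Cminus (Cplus (Cmult (RtoC 1) (E zero_op m n)) (E zero_op m n)) (E zero_op m n)) by ring.
   rewrite <- H. ring.
 - apply functional_extensionality; intros p. apply functional_extensionality; intros q.
   unfold op_add, op_scale, zero_op. ring. Qed.

Lemma E_scal a X m n : trace_class X -> E (op_scale a X) m n = Cmult a (E X m n).
Proof. intros HX. pose proof (Hlin a X zero_op HX zero_tc m n). rewrite E_zero in H.
 replace (op_add (op_scale a X) zero_op) with (op_scale a X) in H. rewrite H; ring.
 apply functional_extensionality; intros p. apply functional_extensionality; intros q.
 unfold op_add, op_scale, zero_op. ring. Qed.

Lemma E_add X Y m n : trace_class X -> trace_class Y -> E (op_add X Y) m n = Cplus (E X m n) (E Y m n).
Proof. intros HX HY. pose proof (Hlin (RtoC 1) X Y HX HY m n).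
 replace (op_add (op_scale (RtoC 1) X) Y) with (op_add X Y) in H. rewrite H; ring.
 apply functional_extensionality; intros p. apply functional_extensionality; intros q.
 unfold op_add, op_scale. ring. Qed.

Lemma E_ext X Y m n : (forall p q, X p q = Y p q) -> E X m n = E Y m n.
Proof. intros H. replace X with Y; auto. apply functional_extensionality; intros p.
 apply functional_extensionality; intros q. auto. Qed.

Definition unit_comb (L : list (nat * nat)) (w : nat * nat -> C) : op :=
  fun p q => lsum (fun x => Cmult (w x) (mat_unit (fst x) (snd x) p q)) L.

Lemma unit_comb_fin_support L w : exists N, fin_support N (unit_comb L w).
Proof. induction L as [|x L [N HN]].
 - exists 0%nat. intros m n _. reflexivity.
 - exists (max N (S (max (fst x) (snd x)))). intros m n Hmn. unfold unit_comb at 1. rewrite lsum_cons.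
   change (lsum (fun x0 => Cmult (w x0) (mat_unit (fst x0) (snd x0) m n)) L) with (unit_comb L w m n). rewrite HN by lia. rewrite (mat_unit_fin_support (fst x) (snd x)) by lia. ring. Qed.

Lemma unit_comb_tc L w : trace_class (unit_comb L w).
Proof. destruct (unit_comb_fin_support L w) as [N HN]. eapply fin_support_tc; eauto. Qed.

Lemma E_unit_comb L w p q : E (unit_comb L w) p q = lsum (fun x => Cmult (w x) (E (mat_unit (fst x) (snd x)) p q)) L.
Proof. induction L as [|x L IH].
 - rewrite lsum_nil. rewrite <- (E_zero p q). apply E_ext. intros; reflexivity.
 - rewrite lsum_cons, <- IH.
   assert (Ht : trace_class (op_scale (w x) (mat_unit (fst x) (snd x)))).
   { unfold op_scale. apply (fin_support_tc (S (max (fst x) (snd x)))). intros m n H.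
     rewrite mat_unit_fin_support; auto. ring. }
   rewrite <- (E_scal (w x) (mat_unit (fst x) (snd x)) p q (mat_unit_tc _ _)).
   rewrite <- (E_add _ _ p q Ht (unit_comb_tc L w)).
   apply E_ext. intros; unfold unit_comb, op_add, op_scale; rewrite lsum_cons; reflexivity. Qed.

End Lin.

Definition trunc (N : nat) (X : op) : op :=
  fun m n => if Nat.ltb m N && Nat.ltb n N then X m n else RtoC 0.

Lemma trunc_unit_comb N X p q : trunc N X p q =
  unit_comb (list_prod (seq 0 N) (seq 0 N)) (fun x => X (fst x) (snd x)) p q.
Proof. unfold unit_comb. rewrite (lsum_single nat_pair_dec _ _ (p, q)).
 - unfold trunc, mat_unit. simpl. rewrite !Nat.eqb_refl. simpl.
   destruct (in_dec nat_pair_dec (p, q) (list_prod (seq 0 N) (seq 0 N))) as [Hi|Hi].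
   + apply in_prod_iff in Hi. destruct Hi as [H1 H2]. apply in_seq in H1. apply in_seq in H2.
     destruct (Nat.ltb_spec p N); destruct (Nat.ltb_spec q N); try lia. simpl. ring.
   + destruct (Nat.ltb_spec p N); destruct (Nat.ltb_spec q N); simpl; auto.
     exfalso; apply Hi, in_prod_iff; split; apply in_seq; lia.
 - apply NoDup_list_prod; apply seq_NoDup.
 - intros [m n] _ Hne. unfold mat_unit. simpl. destruct (Nat.eqb_spec p m); destruct (Nat.eqb_spec q n); simpl; try ring.
   subst; contradiction. Qed.

Lemma Cmult_integral (a b : C) : Cmult a b = RtoC 0 -> a = RtoC 0 \/ b = RtoC 0.
Proof. intros H. destruct (classic (a = RtoC 0)) as [Ha|Ha]; auto. right.
 replace b with (Cmult (Cinv a) (Cmult a b)). rewrite H; ring. field; auto. Qed.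

(** * Covariance and the Choi bands *)

Lemma expi_conj_mult x y : Cmult (expi x) (Cconj (expi y)) = expi (x - y).
Proof. unfold expi. rewrite cos_minus, sin_minus. apply injective_projections; simpl; ring. Qed.

Lemma INR_diff_ge1 a b : a <> b -> 1 <= Rabs (INR a - INR b).
Proof. intros H. destruct (Nat.lt_total a b) as [Hl|[Hl|Hl]]; [|lia|].
 - rewrite Rabs_minus_sym. rewrite <- minus_INR by lia. rewrite Rabs_pos_eq by apply pos_INR.
   replace 1 with (INR 1) by reflexivity. apply le_INR; lia.
 - rewrite <- minus_INR by lia. rewrite Rabs_pos_eq by apply pos_INR.
   replace 1 with (INR 1) by reflexivity. apply le_INR; lia. Qed.

(* With [phi = PI / |m + q - n - p|] the two sides of the invariance acquire phases differing by [-1]. *)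
Lemma U1_selection_rule (E : op -> op) :
  (forall (a : C) X Y, trace_class X -> trace_class Y ->
     forall m n, E (op_add (op_scale a X) Y) m n = Cplus (Cmult a (E X m n)) (E Y m n)) ->
  U1_invariant E -> forall m n p q, (p + n <> q + m)%nat -> E (mat_unit m n) p q = RtoC 0.
Proof. intros Hlin HU m n p q Hne.
 set (d := INR (m + q) - INR (n + p)).
 assert (Hd : 1 <= Rabs d) by (apply INR_diff_ge1; lia).
 set (phi := PI / Rabs d).
 assert (Hphi : 0 <= phi < 2 * PI).
 { unfold phi. pose proof PI_RGT_0. split. apply Rlt_le, Rdiv_lt_0_compat; lra.
   apply (Rle_lt_trans _ PI); [|lra]. unfold Rdiv. rewrite <- (Rmult_1_r PI) at 2.
   apply Rmult_le_compat_l; [lra|]. rewrite <- Rinv_1. apply Rinv_le_contravar; lra. }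
 assert (H1 := HU phi Hphi (mat_unit m n) (mat_unit_tc m n) p q).
 rewrite (E_ext E _ (op_scale (expi (phi * INR m - phi * INR n)) (mat_unit m n))) in H1.
 2: { intros a b. unfold conjT, op_scale, mat_unit. destruct (Nat.eqb_spec a m); destruct (Nat.eqb_spec b n); simpl; subst.
      - rewrite <- expi_conj_mult. ring.
      - ring. - ring. - ring. }
 rewrite (E_scal E Hlin _ _ _ _ (mat_unit_tc m n)) in H1. unfold conjT in H1.
 replace (Cmult (Cmult (expi (phi * INR p)) (E (mat_unit m n) p q)) (Cconj (expi (phi * INR q))))
   with (Cmult (expi (phi * INR p - phi * INR q)) (E (mat_unit m n) p q)) in H1
   by (rewrite <- expi_conj_mult; ring).
 set (z := E (mat_unit m n) p q) in *. apply Ceq_minus in H1.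
 replace (Cminus (Cmult (expi (phi * INR m - phi * INR n)) z) (Cmult (expi (phi * INR p - phi * INR q)) z))
   with (Cmult (Cminus (expi (phi * INR m - phi * INR n)) (expi (phi * INR p - phi * INR q))) z) in H1 by ring.
 apply Cmult_integral in H1. destruct H1 as [H1|H1]; auto. exfalso.
 apply Ceq_minus in H1. unfold expi in H1. injection H1 as Hc Hs.
 set (x := phi * INR m - phi * INR n) in *. set (y := phi * INR p - phi * INR q) in *.
 assert (cos (x - y) = 1). { rewrite cos_minus, Hc, Hs. rewrite <- (sin2_cos2 y). unfold Rsqr; ring. }
 assert (x - y = phi * d) by (unfold x, y, d; rewrite !plus_INR; ring).
 rewrite H0 in H. unfold phi in H.
 assert (Hd0 : d <> 0) by (intro Ed; rewrite Ed, Rabs_R0 in Hd; lra).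
 destruct (Rle_or_lt 0 d) as [Hp|Hn].
 - rewrite Rabs_pos_eq in H by lra. replace (PI / d * d) with PI in H by (field; exact Hd0). rewrite cos_PI in H. lra.
 - rewrite Rabs_left in H by lra. replace (PI / - d * d) with (- PI) in H by (field; exact Hd0).
   rewrite cos_neg, cos_PI in H. lra. Qed.

Definition qform (N : nat) (psi : nat -> C) (M : nat -> nat -> C) : C :=
  fsum N (fun m => fsum N (fun n => Cmult (Cmult (Cconj (psi m)) (M m n)) (psi n))).

Definition psd_matrix (M : nat -> nat -> C) : Prop :=
  forall psi N, (forall m, (N <= m)%nat -> psi m = RtoC 0) -> exists r, 0 <= r /\ qform N psi M = RtoC r.

(* [zshift m k] is [m + k] when [zshift_ok m k], and [0] otherwise. *)
Definition zshift (m : nat) (k : Z) : nat := Z.to_nat (Z.of_nat m + k).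
Definition zshift_ok (m : nat) (k : Z) : bool := Z.leb 0 (Z.of_nat m + k).

(* [choi_band E k m n = <m+k| E(|m><n|) |n+k>]; by covariance these bands determine [E]. *)
Definition choi_band (E : op -> op) (k : Z) : nat -> nat -> C :=
  fun m n => if zshift_ok m k && zshift_ok n k then E (mat_unit m n) (zshift m k) (zshift n k) else RtoC 0.

Lemma Cconj_mult_self z : Cmult (Cconj z) z = RtoC (Cmod z ^ 2).
Proof. rewrite Cmod2_conj. ring. Qed.

Lemma mat_unit_psd_block (N : nat) : psd_block N (fun i j => mat_unit i j).
Proof. intros psi N' Hs. set (x := fun i => psi i i).
 exists (Cmod (fsum N x) ^ 2). split. apply Cmod_sq_ge. rewrite <- Cconj_mult_self.
 rewrite Cconj_sum.
 transitivity (fsum N (fun i => fsum N (fun j => Cmult (Cconj (x i)) (x j)))).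
 - apply fsum_ext; intros i Hi; apply fsum_ext; intros j Hj.
   rewrite (fsum_single N' _ i).
   + destruct (Nat.ltb_spec i N').
     * rewrite (fsum_single N' _ j).
       -- destruct (Nat.ltb_spec j N').
          ++ unfold mat_unit. rewrite !Nat.eqb_refl. simpl. unfold x. ring.
          ++ unfold x. rewrite (Hs j j) by lia. ring.
       -- intros n Hn Hne. unfold mat_unit. rewrite Nat.eqb_refl. destruct (Nat.eqb_spec n j); [lia|]. simpl; ring.
     * unfold x. rewrite (Hs i i), RtoC_conj by lia. ring.
   + intros m Hm Hne. apply fsum_zero. intros n _. unfold mat_unit. destruct (Nat.eqb_spec m i); [lia|]. simpl; ring.
 - rewrite (fsum_ext N _ (fun i => Cmult (fsum N x) (Cconj (x i)))).
   + rewrite fsum_scal. ring.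
   + intros i _. rewrite fsum_scal. ring. Qed.

Definition completely_positive (E : op -> op) : Prop :=
  forall (d : nat) (Xb : nat -> nat -> op),
     (forall i j, (i < d)%nat -> (j < d)%nat -> trace_class (Xb i j)) ->
     psd_block d Xb -> psd_block d (fun i j => E (Xb i j)).

(* Complete positivity applied to the positive block [(|i><j|)_(i,j)] and the test vectors [psi i |i+k>]. *)
Lemma choi_band_psd_of_cp (E : op -> op) k : completely_positive E -> psd_matrix (choi_band E k).
Proof. intros HCP psi N Hs.
 set (N' := (N + Z.to_nat (Z.abs k) + 1)%nat).
 set (psi' := fun i m => if Z.eqb (Z.of_nat m) (Z.of_nat i + k) then psi i else RtoC 0).
 assert (H1 : forall i, zshift_ok i k = true -> psi' i (zshift i k) = psi i).
 { intros i Hi. unfold psi', zshift_ok, zshift in *. apply Z.leb_le in Hi. destruct (Z.eqb_spec (Z.of_nat (Z.to_nat (Z.of_nat i + k))) (Z.of_nat i + k)); auto. lia. }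
 assert (H2 : forall i m, m <> zshift i k -> psi' i m = RtoC 0).
 { intros i m Hm. unfold psi', zshift in *. destruct (Z.eqb_spec (Z.of_nat m) (Z.of_nat i + k)); auto. lia. }
 assert (H3 : forall i m, zshift_ok i k = false -> psi' i m = RtoC 0).
 { intros i m Hi. unfold psi', zshift_ok in *. apply Z.leb_gt in Hi. destruct (Z.eqb_spec (Z.of_nat m) (Z.of_nat i + k)); auto. lia. }
 assert (H4 : forall i, zshift_ok i k = true -> (i < N)%nat -> (zshift i k < N')%nat).
 { intros i Hi Hl. unfold zshift_ok, zshift, N' in *. apply Z.leb_le in Hi. lia. }
 assert (Hsupp : forall i m, (N' <= m)%nat -> psi' i m = RtoC 0).
 { intros i m Hm. destruct (Nat.lt_ge_cases i N) as [Hl|Hl].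
   - destruct (zshift_ok i k) eqn:Ho; [|apply H3; auto]. apply H2. pose proof (H4 i Ho Hl). lia.
   - unfold psi'. rewrite (Hs i Hl). destruct (Z.eqb _ _); auto. }
 destruct (HCP N (fun i j => mat_unit i j) (fun i j _ _ => mat_unit_tc i j) (mat_unit_psd_block N) psi' N' Hsupp) as [r [Hr Heq]].
 exists r. split; auto. rewrite <- Heq. unfold qform. apply fsum_ext; intros i Hi; apply fsum_ext; intros j Hj.
 symmetry. unfold choi_band. destruct (zshift_ok i k) eqn:Hoi.
 - rewrite (fsum_single N' _ (zshift i k)).
   + destruct (Nat.ltb_spec (zshift i k) N'); [|pose proof (H4 i Hoi Hi); lia].
     destruct (zshift_ok j k) eqn:Hoj; simpl.
     * rewrite (fsum_single N' _ (zshift j k)).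
       -- destruct (Nat.ltb_spec (zshift j k) N'); [|pose proof (H4 j Hoj Hj); lia].
          rewrite H1, H1; auto.
       -- intros n _ Hn. rewrite (H2 j n Hn). ring.
     * rewrite fsum_zero; [ring|]. intros n _. rewrite (H3 j n Hoj). ring.
   + intros m _ Hm. rewrite (H2 i m Hm), RtoC_conj. apply fsum_zero; intros; ring.
 - simpl. rewrite fsum_zero; [ring|]. intros m _. rewrite (H3 i m Hoi), RtoC_conj. apply fsum_zero; intros; ring. Qed.

(** * Positive semidefinite matrices and their Cholesky factorisation *)

Lemma fsum_two N f m n : m <> n -> (m < N)%nat -> (n < N)%nat ->
  (forall l, (l < N)%nat -> l <> m -> l <> n -> f l = RtoC 0) -> fsum N f = Cplus (f m) (f n).
Proof. intros Hmn Hm Hn H.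
 rewrite (fsum_ext N f (fun l => Cplus (if Nat.eqb l m then f l else RtoC 0) (if Nat.eqb l n then f l else RtoC 0))).
 - rewrite fsum_plus. rewrite (fsum_single N _ m), (fsum_single N _ n).
   + rewrite !Nat.eqb_refl. destruct (Nat.ltb_spec m N); destruct (Nat.ltb_spec n N); try lia. reflexivity.
   + intros l _ Hl. destruct (Nat.eqb_spec l n); [contradiction|auto].
   + intros l _ Hl. destruct (Nat.eqb_spec l m); [contradiction|auto].
 - intros l Hl. destruct (Nat.eqb_spec l m); destruct (Nat.eqb_spec l n); subst; try lia; try ring.
   rewrite H; auto. ring. Qed.

Definition qform2 (a z w b x y : C) : C :=
  Cplus (Cplus (Cplus (Cmult (Cmult (Cconj x) a) x) (Cmult (Cmult (Cconj x) z) y))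
    (Cmult (Cmult (Cconj y) w) x)) (Cmult (Cmult (Cconj y) b) y).

Lemma qform2_psd (a z w b : C) :
  (forall x y, exists r, 0 <= r /\ qform2 a z w b x y = RtoC r) ->
  Im a = 0 /\ 0 <= Re a /\ Im b = 0 /\ 0 <= Re b /\ w = Cconj z /\ Cmod z ^ 2 <= Re a * Re b.
Proof. intros H. destruct a as [a1 a2], z as [z1 z2], w as [w1 w2], b as [b1 b2]. unfold Re, Im; simpl.
 destruct (H (1,0) (0,0)) as [r1 [Hr1 E1]]. unfold qform2, Cconj, Cmult, Cplus, RtoC in E1; simpl in E1.
 injection E1 as E1a E1b.
 destruct (H (0,0) (1,0)) as [r2 [Hr2 E2]]. unfold qform2, Cconj, Cmult, Cplus, RtoC in E2; simpl in E2.
 injection E2 as E2a E2b.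
 destruct (H (1,0) (1,0)) as [r3 [Hr3 E3]]. unfold qform2, Cconj, Cmult, Cplus, RtoC in E3; simpl in E3.
 injection E3 as E3a E3b.
 destruct (H (1,0) (0,1)) as [r4 [Hr4 E4]]. unfold qform2, Cconj, Cmult, Cplus, RtoC in E4; simpl in E4.
 injection E4 as E4a E4b.
 assert (Ha2 : a2 = 0) by nra. assert (Hb2 : b2 = 0) by nra.
 assert (Hw1 : w1 = z1) by nra. assert (Hw2 : w2 = - z2) by nra.
 assert (Ha1 : 0 <= a1) by nra. assert (Hb1 : 0 <= b1) by nra.
 subst. split; [auto|split; [auto|split; [auto|split; [auto|split]]]].
 - unfold Cconj; simpl. reflexivity.
 - unfold Cmod. simpl. rewrite !Rmult_1_r. rewrite sqrt_sqrt by nra.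
   set (n2 := z1 * z1 + z2 * z2).
   assert (Hgen : forall s, 0 <= s * s * n2 * a1 - 2 * s * n2 + b1).
   { intros s. destruct (H (- s * z1, - s * z2) (1,0)) as [r [Hr E]].
     unfold qform2, Cconj, Cmult, Cplus, RtoC in E; simpl in E. injection E as Ea Eb.
     unfold n2. nra. }
   destruct (Rle_lt_or_eq_dec 0 a1 Ha1) as [Hp|Hz].
   + specialize (Hgen (/ a1)). replace (/ a1 * / a1 * n2 * a1 - 2 * / a1 * n2 + b1) with ((a1 * b1 - n2) / a1) in Hgen by (field; lra).
     assert (0 <= a1 * b1 - n2). { apply (Rmult_le_pos _ a1) in Hgen; [|lra]. replace ((a1 * b1 - n2) / a1 * a1) with (a1 * b1 - n2) in Hgen by (field; lra). auto. }
     lra.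
   + subst a1. assert (n2 = 0).
     { destruct (Req_dec n2 0); auto. assert (0 < n2) by (unfold n2 in *; nra).
       specialize (Hgen ((b1 + 1) / (2 * n2))). replace (((b1 + 1) / (2 * n2)) * ((b1 + 1) / (2 * n2)) * n2 * 0 - 2 * ((b1 + 1) / (2 * n2)) * n2 + b1) with (-1) in Hgen by (field; lra). lra. }
     rewrite H0. lra. Qed.

Lemma psd_diag R m : psd_matrix R -> Im (R m m) = 0 /\ 0 <= Re (R m m).
Proof. intros H.
 destruct (H (fun l => if Nat.eqb l m then RtoC 1 else RtoC 0) (S m)) as [r [Hr E]].
 { intros l Hl. destruct (Nat.eqb_spec l m); [lia|auto]. }
 unfold qform in E. rewrite (fsum_single _ _ m) in E.
 - rewrite (fsum_single _ _ m) in E. rewrite Nat.eqb_refl in E. destruct (Nat.ltb_spec m (S m)); [|lia].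
   replace (Cmult (Cmult (Cconj (RtoC 1)) (R m m)) (RtoC 1)) with (R m m) in E.
   + rewrite E. simpl; auto.
   + rewrite RtoC_conj; ring.
   + intros n _ Hn. destruct (Nat.eqb_spec n m); [contradiction|ring].
 - intros l _ Hl. apply fsum_zero. intros n _. destruct (Nat.eqb_spec l m); [contradiction|]. rewrite RtoC_conj; ring. Qed.

Lemma psd_pair R m n : psd_matrix R -> m <> n ->
  R n m = Cconj (R m n) /\ Cmod (R m n) ^ 2 <= Re (R m m) * Re (R n n).
Proof. intros H Hmn.
 assert (HQ : forall x y, exists r, 0 <= r /\ qform2 (R m m) (R m n) (R n m) (R n n) x y = RtoC r).
 { intros x y. set (psi := fun l => if Nat.eqb l m then x else if Nat.eqb l n then y else RtoC 0).
   destruct (H psi (S (max m n))) as [r [Hr E]].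
   { intros l Hl. unfold psi. destruct (Nat.eqb_spec l m); [lia|]. destruct (Nat.eqb_spec l n); [lia|auto]. }
   exists r. split; auto. rewrite <- E. unfold qform.
   assert (Hpm : psi m = x) by (unfold psi; rewrite Nat.eqb_refl; auto).
   assert (Hpn : psi n = y) by (unfold psi; destruct (Nat.eqb_spec n m); [lia|]; rewrite Nat.eqb_refl; auto).
   assert (Hpo : forall l, l <> m -> l <> n -> psi l = RtoC 0).
   { intros l H1 H2. unfold psi. destruct (Nat.eqb_spec l m); [contradiction|]. destruct (Nat.eqb_spec l n); [contradiction|auto]. }
   rewrite (fsum_two _ _ m n); auto; try lia.
   - rewrite (fsum_two _ _ m n); auto; try lia.
     + rewrite (fsum_two _ _ m n); auto; try lia.
       * rewrite Hpm, Hpn. unfold qform2. ring.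
       * intros l _ H1 H2. rewrite (Hpo l H1 H2). ring.
     + intros l _ H1 H2. rewrite (Hpo l H1 H2). ring.
   - intros l _ H1 H2. rewrite (Hpo l H1 H2), RtoC_conj. apply fsum_zero; intros; ring. }
 destruct (qform2_psd _ _ _ _ HQ) as [_ [_ [_ [_ [Hw Hb]]]]]. auto. Qed.

Lemma psd_herm R m n : psd_matrix R -> R n m = Cconj (R m n).
Proof. intros H. destruct (Nat.eq_dec m n) as [<-|Hne].
 - destruct (psd_diag R m H) as [Him _]. destruct (R m m) as [x y]. unfold Im in Him; simpl in Him; subst.
   unfold Cconj; simpl. rewrite Ropp_0. reflexivity.
 - apply psd_pair; auto. Qed.

Lemma psd_real_diag R m : psd_matrix R -> R m m = RtoC (Re (R m m)).
Proof. intros H. apply C_real. apply (psd_diag R m H). Qed.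

Lemma fsum_extend N N2 f : (N <= N2)%nat -> (forall m, (N <= m)%nat -> (m < N2)%nat -> f m = RtoC 0) ->
  fsum N2 f = fsum N f.
Proof. intros Hle H. induction N2.
 - assert (N = 0%nat) by lia. subst; reflexivity.
 - destruct (Nat.eq_dec N (S N2)) as [<-|Hne]; auto.
   simpl. rewrite IHN2 by (try lia; intros; apply H; lia). rewrite (H N2) by lia. ring. Qed.

Lemma qform_extend N N2 psi M : (N <= N2)%nat -> (forall m, (N <= m)%nat -> psi m = RtoC 0) ->
  qform N2 psi M = qform N psi M.
Proof. intros Hle H. unfold qform. rewrite (fsum_extend N N2); [| auto |].
 - apply fsum_ext. intros m Hm. apply fsum_extend; auto. intros n Hn _. rewrite (H n Hn). ring.
 - intros m Hm _. rewrite (H m Hm), RtoC_conj. apply fsum_zero; intros; ring. Qed.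

Lemma fsum_prod N a b : fsum N (fun m => fsum N (fun n => Cmult (a m) (b n))) = Cmult (fsum N a) (fsum N b).
Proof. rewrite (fsum_ext N _ (fun m => Cmult (a m) (fsum N b))) by (intros; apply fsum_scal).
 rewrite (fsum_ext N _ (fun m => Cmult (fsum N b) (a m))) by (intros; ring). rewrite fsum_scal. ring. Qed.

Lemma fsum_minus N f g : fsum N (fun m => Cminus (f m) (g m)) = Cminus (fsum N f) (fsum N g).
Proof. induction N; simpl. ring. rewrite IHN; ring. Qed.

Definition delta (al l : nat) : C := if Nat.eqb l al then RtoC 1 else RtoC 0.

Lemma fsum_delta_r N al f : (al < N)%nat -> fsum N (fun n => Cmult (f n) (delta al n)) = f al.
Proof. intros H. rewrite (fsum_single N _ al).
 - unfold delta. rewrite Nat.eqb_refl. destruct (Nat.ltb_spec al N); [ring|lia].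
 - intros n _ Hn. unfold delta. destruct (Nat.eqb_spec n al); [contradiction|ring]. Qed.

Lemma fsum_delta_l N al f : (al < N)%nat -> fsum N (fun n => Cmult (delta al n) (f n)) = f al.
Proof. intros H. rewrite <- (fsum_delta_r N al f H). apply fsum_ext; intros; ring. Qed.

Lemma Cconj_delta al l : Cconj (delta al l) = delta al l.
Proof. unfold delta. destruct (Nat.eqb l al); apply RtoC_conj. Qed.

Definition chol_col (R : nat -> nat -> C) (al : nat) : nat -> C :=
  fun m => if Rlt_dec 0 (Re (R al al)) then Cmult (R m al) (RtoC (/ sqrt (Re (R al al)))) else RtoC 0.
Definition chol_update (R : nat -> nat -> C) (al : nat) : nat -> nat -> C :=
  fun m n => Cminus (R m n) (Cmult (chol_col R al m) (Cconj (chol_col R al n))).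

Lemma qform_sub_rank_one N psi R x :
  qform N psi (fun m n => Cminus (R m n) (Cmult (x m) (Cconj (x n)))) =
  Cminus (qform N psi R)
    (Cmult (fsum N (fun m => Cmult (Cconj (psi m)) (x m))) (fsum N (fun n => Cmult (Cconj (x n)) (psi n)))).
Proof. unfold qform. rewrite <- fsum_prod, <- fsum_minus. apply fsum_ext; intros m _.
 rewrite <- fsum_minus. apply fsum_ext; intros n _. ring. Qed.

Lemma qform_add_unit N psi R al t : (al < N)%nat ->
  qform N (fun l => Cplus (psi l) (Cmult (delta al l) t)) R =
  Cplus (Cplus (Cplus (qform N psi R) (Cmult (fsum N (fun m => Cmult (Cconj (psi m)) (R m al))) t))
    (Cmult (Cconj t) (fsum N (fun n => Cmult (R al n) (psi n))))) (Cmult (Cmult (Cconj t) t) (R al al)).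
Proof. intros Hal. unfold qform.
 rewrite (fsum_ext N _ (fun m => Cplus (Cplus (Cplus
    (fsum N (fun n => Cmult (Cmult (Cconj (psi m)) (R m n)) (psi n)))
    (fsum N (fun n => Cmult (Cmult (Cmult (Cconj (psi m)) (R m n)) t) (delta al n))))
    (fsum N (fun n => Cmult (delta al m) (Cmult (Cmult (Cconj t) (R m n)) (psi n)))))
    (fsum N (fun n => Cmult (delta al m) (Cmult (Cmult (Cmult (Cconj t) (R m n)) t) (delta al n)))))).
 2: { intros m _. rewrite <- !fsum_plus. apply fsum_ext; intros n _.
      rewrite Cplus_conj, Cmult_conj, Cconj_delta. ring. }
 rewrite !fsum_plus. f_equal; [f_equal; [f_equal|]|].
 - rewrite (fsum_ext N _ (fun m => Cmult t (Cmult (Cconj (psi m)) (R m al)))).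
   + rewrite fsum_scal. ring.
   + intros m _. rewrite (fsum_delta_r N al (fun n => Cmult (Cmult (Cconj (psi m)) (R m n)) t)) by lia. ring.
 - rewrite (fsum_ext N _ (fun m => Cmult (delta al m) (fsum N (fun n => Cmult (Cmult (Cconj t) (R m n)) (psi n)))))
     by (intros; apply fsum_scal).
   rewrite fsum_delta_l by lia.
   rewrite (fsum_ext N _ (fun n => Cmult (Cconj t) (Cmult (R al n) (psi n)))) by (intros; ring).
   apply fsum_scal.
 - rewrite (fsum_ext N _ (fun m => Cmult (delta al m)
     (fsum N (fun n => Cmult (Cmult (Cmult (Cconj t) (R m n)) t) (delta al n))))) by (intros; apply fsum_scal).
   rewrite fsum_delta_l, fsum_delta_r by lia. ring. Qed.

(* Schur complement: [qform psi (chol_update R al)] is the form of [R] at [psi] moved along [|al>] to its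
   minimum, hence nonnegative. *)
Lemma chol_update_psd R al : psd_matrix R -> psd_matrix (chol_update R al).
Proof. intros H psi N Hs.
 destruct (Rlt_dec 0 (Re (R al al))) as [Hd|Hd].
 2: { destruct (H psi N Hs) as [r [Hr E]]. exists r; split; auto. rewrite <- E. unfold qform, chol_update, chol_col.
      destruct (Rlt_dec 0 (Re (R al al))); [contradiction|].
      apply fsum_ext; intros; apply fsum_ext; intros. ring. }
 set (d := Re (R al al)) in *.
 assert (Hsd : 0 < sqrt d) by (apply sqrt_lt_R0; auto).
 assert (Hdd : R al al = RtoC d) by (apply psd_real_diag; auto).
 assert (Hd0 : RtoC d <> RtoC 0) by (intro Hc; apply RtoC_inj in Hc; lra).
 assert (Hsd0 : RtoC (sqrt d) <> RtoC 0) by (intro Hc; apply RtoC_inj in Hc; lra).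
 assert (Hsq : RtoC d = Cmult (RtoC (sqrt d)) (RtoC (sqrt d))) by (rewrite <- RtoC_mult, sqrt_sqrt; auto; lra).
 set (N2 := max N (S al)).
 set (u := fsum N2 (fun m => Cmult (Cconj (psi m)) (R m al))).
 set (v := fsum N2 (fun n => Cmult (R al n) (psi n))).
 assert (Huv : Cconj v = u).
 { unfold u, v. rewrite Cconj_sum. apply fsum_ext. intros m _. rewrite Cmult_conj.
   rewrite <- (psd_herm R al m H). ring. }
 set (x := fun m => Cmult (R m al) (Cinv (RtoC (sqrt d)))).
 assert (Hq : qform N psi (chol_update R al) = Cminus (qform N2 psi R) (Cmult (Cmult u v) (Cinv (RtoC d)))).
 { rewrite <- (qform_extend N N2) by (auto; lia).
   replace (chol_update R al) with (fun m n => Cminus (R m n) (Cmult (x m) (Cconj (x n)))).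
   2: { apply functional_extensionality; intros m; apply functional_extensionality; intros n.
        unfold chol_update, chol_col, x. fold d. destruct (Rlt_dec 0 d); [|contradiction].
        rewrite RtoC_inv; [reflexivity|lra]. }
   rewrite qform_sub_rank_one. f_equal.
   rewrite (fsum_ext N2 _ (fun m => Cmult (Cinv (RtoC (sqrt d))) (Cmult (Cconj (psi m)) (R m al)))) by (intros; unfold x; ring).
   rewrite (fsum_ext N2 (fun n => Cmult (Cconj (x n)) (psi n)) (fun n => Cmult (Cinv (RtoC (sqrt d))) (Cmult (R al n) (psi n)))).
   2: { intros n _. unfold x. rewrite Cmult_conj, Cinv_conj, RtoC_conj, <- (psd_herm R n al H) by auto. ring. }
   rewrite !fsum_scal. fold u v. rewrite Hsq. field. auto. }
 set (t := Cmult (Copp v) (Cinv (RtoC d))).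
 destruct (H (fun l => Cplus (psi l) (Cmult (delta al l) t)) N2) as [r [Hr E]].
 { intros l Hl. unfold delta. rewrite Hs by lia. destruct (Nat.eqb_spec l al); [lia|ring]. }
 exists r. split; auto. rewrite Hq, <- E, qform_add_unit by lia. fold u v.
 unfold t. rewrite Cmult_conj, Cinv_conj, RtoC_conj, Copp_conj, Huv, Hdd by auto. field. auto. Qed.

Lemma chol_update_zero R al : psd_matrix R -> (forall m n, (m < al \/ n < al)%nat -> R m n = RtoC 0) ->
  forall m n, (m < S al \/ n < S al)%nat -> chol_update R al m n = RtoC 0.
Proof. intros H Hz m n Hmn. unfold chol_update, chol_col.
 assert (Hdd : R al al = RtoC (Re (R al al))) by (apply psd_real_diag; auto).
 destruct (psd_diag R al H) as [_ Hd0].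
 set (d := Re (R al al)) in *.
 destruct (Rlt_dec 0 d) as [Hd|Hd].
 - assert (Hsd : 0 < sqrt d) by (apply sqrt_lt_R0; auto).
   assert (Hsq : sqrt d * sqrt d = d) by (apply sqrt_sqrt; lra).
   assert (Csd : RtoC (sqrt d) <> RtoC 0) by (intro Hc; apply RtoC_inj in Hc; lra).
   destruct (Nat.lt_ge_cases m al) as [Hm|Hm].
   + rewrite (Hz m n), (Hz m al) by auto. ring.
   + destruct (Nat.lt_ge_cases n al) as [Hn|Hn].
     * rewrite (Hz m n), (Hz n al) by auto. rewrite Cmult_0_l, RtoC_conj. ring.
     * destruct Hmn as [Hmn|Hmn].
       -- assert (m = al) by lia. subst m.
          rewrite Cmult_conj, RtoC_conj, <- (psd_herm R n al H). rewrite Hdd.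
          rewrite RtoC_inv by lra. replace (RtoC d) with (Cmult (RtoC (sqrt d)) (RtoC (sqrt d))) by (rewrite <- RtoC_mult, Hsq; auto).
          field. auto.
       -- assert (n = al) by lia. subst n.
          rewrite Cmult_conj, RtoC_conj, Hdd, RtoC_conj.
          rewrite RtoC_inv by lra. replace (RtoC d) with (Cmult (RtoC (sqrt d)) (RtoC (sqrt d))) by (rewrite <- RtoC_mult, Hsq; auto).
          field. auto.
 - assert (Hd' : d = 0) by lra.
   rewrite Cmult_0_l. unfold Cminus. rewrite Copp_0, Cplus_0_r.
   destruct (Nat.lt_ge_cases m al) as [Hm|Hm]; [apply Hz; auto|].
   destruct (Nat.lt_ge_cases n al) as [Hn|Hn]; [apply Hz; auto|].
   assert (m = al \/ n = al) as [->| ->] by lia.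
   + destruct (Nat.eq_dec al n) as [<-|Hne].
     * rewrite Hdd, Hd'. reflexivity.
     * destruct (psd_pair R al n H Hne) as [_ Hb]. fold d in Hb. rewrite Hd', Rmult_0_l in Hb.
       apply Cmod_eq_0. pose proof (Cmod_ge_0 (R al n)). nra.
   + destruct (Nat.eq_dec m al) as [->|Hne].
     * rewrite Hdd, Hd'. reflexivity.
     * destruct (psd_pair R m al H Hne) as [_ Hb]. fold d in Hb. rewrite Hd', Rmult_0_r in Hb.
       apply Cmod_eq_0. pose proof (Cmod_ge_0 (R m al)). nra. Qed.

Fixpoint chol_residual (A : nat -> nat -> C) (k : nat) : nat -> nat -> C :=
  match k with O => A | S k => chol_update (chol_residual A k) k end.
Definition chol_vec (A : nat -> nat -> C) (al : nat) : nat -> C := chol_col (chol_residual A al) al.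

Lemma chol_residual_psd A k : psd_matrix A -> psd_matrix (chol_residual A k).
Proof. intros H; induction k; simpl; auto. apply chol_update_psd; auto. Qed.

Lemma chol_residual_zero A k : psd_matrix A -> forall m n, (m < k \/ n < k)%nat -> chol_residual A k m n = RtoC 0.
Proof. intros H; induction k; intros m n Hmn.
 - lia.
 - simpl. apply chol_update_zero; auto. apply chol_residual_psd; auto. Qed.

Lemma chol_vec_zero A al m : psd_matrix A -> (m < al)%nat -> chol_vec A al m = RtoC 0.
Proof. intros H Hm. unfold chol_vec, chol_col. rewrite (chol_residual_zero A al H m al) by auto.
 destruct (Rlt_dec _ _); ring. Qed.

Lemma chol_telescope A m n K : A m n = Cplus (chol_residual A K m n) (fsum K (fun al => Cmult (chol_vec A al m) (Cconj (chol_vec A al n)))).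
Proof. induction K; simpl. ring. rewrite IHK. unfold chol_update. fold (chol_vec A K m). fold (chol_vec A K n). unfold Cminus. ring. Qed.

Lemma chol_decomp A m n K : psd_matrix A -> (m < K)%nat ->
  A m n = fsum K (fun al => Cmult (chol_vec A al m) (Cconj (chol_vec A al n))).
Proof. intros H HK. rewrite (chol_telescope A m n K), (chol_residual_zero A K H) by auto. ring. Qed.

(** * Traces and a continuity bound for operations *)

Lemma has_sum_fsum {I} (h : nat -> I -> C) (s : nat -> C) N :
  (forall j, (j < N)%nat -> has_sum (h j) (s j)) ->
  has_sum (fun i => fsum N (fun j => h j i)) (fsum N s).
Proof. intros H. rewrite fsum_lsum. apply has_sum_ext with (fun i => lsum (fun j => h j i) (seq 0 N)).
 intros; rewrite fsum_lsum; reflexivity. apply has_sum_lsum. intros j Hj; apply in_seq in Hj; apply H; lia. Qed.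

Lemma phase_exists (z : C) : exists th, Cmod th <= 1 /\ Cmult th z = RtoC (Cmod z).
Proof. destruct (classic (z = RtoC 0)) as [->|Hz].
 - exists (RtoC 0). rewrite Cmod_0. split; [lra|ring].
 - assert (Hm : 0 < Cmod z) by (apply Cmod_gt_0; auto).
   exists (Cmult (Cconj z) (RtoC (/ Cmod z))). split.
   + rewrite Cmod_mult, Cmod_conj, Cmod_R, Rabs_pos_eq. right; field; lra. apply Rlt_le, Rinv_0_lt_compat; auto.
   + replace (Cmult (Cmult (Cconj z) (RtoC (/ Cmod z))) z) with (Cmult (Cmult (Cconj z) z) (RtoC (/ Cmod z))) by ring.
     rewrite Cconj_mult_self. rewrite <- RtoC_mult. f_equal. field. lra. Qed.

Lemma Cmod_sum_le_of_has_sum (h : nat -> nat -> C) (s : nat -> C) M :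
  (forall p, has_sum (h p) (s p)) ->
  (forall F G, NoDup F -> NoDup G -> rsum (fun i => rsum (fun p => Cmod (h p i)) F) G <= M) ->
  forall F, NoDup F -> rsum (fun p => Cmod (s p)) F <= M.
Proof. intros Hs HM F HF.
 assert (Hth : forall p, exists th, Cmod th <= 1 /\ Cmult th (s p) = RtoC (Cmod (s p))) by (intros; apply phase_exists).
 destruct (choice _ Hth) as [th Hth'].
 assert (H : has_sum (fun i => lsum (fun p => Cmult (th p) (h p i)) F) (lsum (fun p => Cmult (th p) (s p)) F)).
 { apply has_sum_lsum. intros; apply has_sum_scal; auto. }
 rewrite (lsum_ext _ (fun p => RtoC (Cmod (s p)))) in H by (intros; apply Hth').
 rewrite lsum_RtoC in H.
 replace (rsum (fun p => Cmod (s p)) F) with (Re (RtoC (rsum (fun p => Cmod (s p)) F))) by apply re_RtoC.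
 apply (has_sum_re_bound Nat.eq_dec _ _ _ H). intros G HG.
 eapply Rle_trans; [apply Rle_abs|]. eapply Rle_trans; [apply re_le_Cmod|].
 eapply Rle_trans; [apply Cmod_lsum|]. eapply Rle_trans; [|apply (HM F G HF HG)].
 apply rsum_le. intros i _. eapply Rle_trans; [apply Cmod_lsum|]. apply rsum_le. intros p _.
 rewrite Cmod_mult. destruct (Hth' p) as [H1 _]. pose proof (Cmod_ge_0 (h p i)). pose proof (Cmod_ge_0 (th p)). nra. Qed.

Lemma dyad_sum_diag_abs_bound a b A B : sq_bounded a A -> sq_bounded b B -> forall F G, NoDup F -> NoDup G ->
  rsum (fun i => rsum (fun p => Cmod (Cmult (a i p) (Cconj (b i p)))) F) G <= (A + B) / 2.
Proof. intros Ha Hb F G HF HG.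
 eapply Rle_trans. apply rsum_le. intros i _. apply rsum_le. intros p _. apply Cmod_mult_conj_le.
 rewrite (rsum_ext _ (fun i => / 2 * (rsum (fun p => Cmod (a i p) ^ 2) F + rsum (fun p => Cmod (b i p) ^ 2) F))).
 - rewrite rsum_scal, rsum_plus.
   pose proof (pairs_prod (fun q => Cmod (a (fst q) (snd q)) ^ 2) A G F Ha HG HF).
   pose proof (pairs_prod (fun q => Cmod (b (fst q) (snd q)) ^ 2) B G F Hb HG HF). simpl in *. lra.
 - intros i _. rewrite <- rsum_plus, <- rsum_scal. apply rsum_ext. intros; unfold Rdiv; ring. Qed.

Lemma trace_exists X : trace_class X -> exists t, has_trace X t.
Proof. intros H. destruct (trace_class_dyad_sum X H) as [a [b [A [B [Ha [Hb ->]]]]]].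
 apply (has_sum_compare _ (fun p => Cmod (dyad_sum a b p p)) ((A + B) / 2)). intros; lra.
 apply (Cmod_sum_le_of_has_sum (fun p i => Cmult (a i p) (Cconj (b i p)))).
 - intros p. apply (dyad_sum_has_sum a b A B p p Ha Hb).
 - intros F G HF HG. apply dyad_sum_diag_abs_bound; auto. Qed.

Lemma sq_bounded_mono a A A' : sq_bounded a A -> A <= A' -> sq_bounded a A'.
Proof. intros H Hle G HG. specialize (H G HG). lra. Qed.

Lemma dyad_sum_psd_block (w : nat -> nat -> nat -> C) B d : (forall i, sq_bounded (w i) B) ->
  psd_block d (fun i j => dyad_sum (w i) (w j)).
Proof. intros Hw psi N Hs.
 set (cl := fun l => fsum d (fun i => fsum N (fun m => Cmult (Cconj (psi i m)) (w i l m)))).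
 set (S := fsum d (fun i => fsum d (fun j => fsum N (fun m => fsum N (fun n =>
        Cmult (Cmult (Cconj (psi i m)) (dyad_sum (w i) (w j) m n)) (psi j n)))))).
 assert (HS : has_sum (fun l => RtoC (Cmod (cl l) ^ 2)) S).
 { apply has_sum_ext with (fun l => fsum d (fun i => fsum d (fun j => fsum N (fun m => fsum N (fun n =>
        Cmult (Cmult (Cconj (psi i m)) (Cmult (w i l m) (Cconj (w j l n)))) (psi j n)))))).
   - intros l. rewrite <- Cconj_mult_self.
     transitivity (Cmult (cl l) (Cconj (cl l))); [|ring].
     unfold cl. rewrite !Cconj_sum.
     rewrite (fsum_ext d _ (fun i => fsum N (fun m => fsum d (fun j => fsum N (fun n =>
        Cmult (Cmult (Cconj (psi i m)) (w i l m)) (Cmult (Cconj (w j l n)) (psi j n))))))).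
     + rewrite (fsum_ext d _ (fun i => Cmult (fsum N (fun m => Cmult (Cconj (psi i m)) (w i l m)))
           (fsum d (fun j => fsum N (fun n => Cmult (Cconj (w j l n)) (psi j n)))))).
       * rewrite (fsum_ext d (fun i => Cmult _ _) (fun i => Cmult (fsum d (fun j => fsum N (fun n => Cmult (Cconj (w j l n)) (psi j n))))
             (fsum N (fun m => Cmult (Cconj (psi i m)) (w i l m))))) by (intros; ring).
         rewrite fsum_scal. rewrite Cmult_comm. f_equal. apply fsum_ext; intros j _. rewrite Cconj_sum.
         apply fsum_ext; intros n _. rewrite Cmult_conj, Cconj_conj. ring.
       * intros i _. rewrite (fsum_ext N _ (fun m => Cmult (Cmult (Cconj (psi i m)) (w i l m))
            (fsum d (fun j => fsum N (fun n => Cmult (Cconj (w j l n)) (psi j n)))))).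
         -- rewrite (fsum_ext N (fun m => Cmult _ _) (fun m => Cmult (fsum d (fun j => fsum N (fun n => Cmult (Cconj (w j l n)) (psi j n))))
               (Cmult (Cconj (psi i m)) (w i l m)))) by (intros; ring). rewrite fsum_scal. ring.
         -- intros m _. rewrite <- fsum_scal. apply fsum_ext; intros j _. rewrite <- fsum_scal. reflexivity.
     + intros i _. rewrite fsum_comm. apply fsum_ext; intros m _. apply fsum_ext; intros j _. apply fsum_ext; intros n _. ring.
   - unfold S. apply has_sum_fsum; intros i _. apply has_sum_fsum; intros j _. apply has_sum_fsum; intros m _.
     apply has_sum_fsum; intros n _.
     apply has_sum_ext with (fun l => Cmult (Cmult (Cconj (psi i m)) (psi j n)) (Cmult (w i l m) (Cconj (w j l n)))).
     + intros; ring.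
     + replace (Cmult (Cmult (Cconj (psi i m)) (dyad_sum (w i) (w j) m n)) (psi j n)) with
         (Cmult (Cmult (Cconj (psi i m)) (psi j n)) (dyad_sum (w i) (w j) m n)) by ring.
       apply has_sum_scal. apply (dyad_sum_has_sum _ _ B B); auto. }
 exists (Re S). split.
 - apply (has_sum_re_lbound Nat.eq_dec _ _ _ HS). intros G _. rewrite lsum_RtoC, re_RtoC.
   apply rsum_nonneg; intros; apply Cmod_sq_ge.
 - apply C_real. apply (has_sum_im0 Nat.eq_dec _ _ HS). intros G _. rewrite lsum_RtoC. reflexivity. Qed.

Lemma positive_psd_matrix Y : Defs.positive Y -> psd_matrix Y.
Proof. intros H psi N Hs. destruct (H (fun _ m => psi m) N (fun _ m Hm => Hs m Hm)) as [r [Hr E]].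
 exists r; split; auto. rewrite <- E. simpl. unfold qform. ring. Qed.

Lemma positive_trace_le Y t p : Defs.positive Y -> has_trace Y t -> Re (Y p p) <= Re t.
Proof. intros Hp Ht. pose proof (positive_psd_matrix Y Hp) as H.
 assert (Hg : forall q, 0 <= Re (Y q q)) by (intros; apply (psd_diag Y q H)).
 assert (Ht' : has_sum (fun q => RtoC (Re (Y q q))) t).
 { apply has_sum_ext with (fun q => Y q q). intros q. apply psd_real_diag; auto. exact Ht. }
 destruct (has_sum_nonneg_le Nat.eq_dec _ _ Hg Ht') as [_ Hle].
 specialize (Hle (p :: nil) (NoDup_cons p (@in_nil _ p) (NoDup_nil _))).
 rewrite rsum_cons in Hle. change (rsum (fun q => Re (Y q q)) nil) with 0 in Hle. lra. Qed.

Lemma dyad_sum_trace_le a A t : sq_bounded a A -> has_trace (dyad_sum a a) t -> Re t <= A.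
Proof. intros Ha Ht. apply (has_sum_re_bound Nat.eq_dec _ _ _ Ht). intros F HF.
 assert (H : has_sum (fun l => lsum (fun p => Cmult (a l p) (Cconj (a l p))) F) (lsum (fun p => dyad_sum a a p p) F)).
 { apply has_sum_lsum. intros p _. apply (dyad_sum_has_sum a a A A); auto. }
 apply (has_sum_re_bound Nat.eq_dec _ _ _ H). intros G HG.
 rewrite (lsum_ext _ (fun l => RtoC (rsum (fun p => Cmod (a l p) ^ 2) F))).
 - rewrite lsum_RtoC, re_RtoC. apply (pairs_prod (fun q => Cmod (a (fst q) (snd q)) ^ 2) A G F Ha HG HF).
 - intros l _. rewrite <- lsum_RtoC. apply lsum_ext. intros p _. rewrite Cmod2_conj. reflexivity. Qed.

Section Op.
Variable E : op -> op.
Hypothesis HE : is_operation E.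

Lemma E_tc X : trace_class X -> trace_class (E X).
Proof. apply (proj1 HE). Qed.

Lemma E_lin : forall (a : C) X Y, trace_class X -> trace_class Y ->
     forall m n, E (op_add (op_scale a X) Y) m n = Cplus (Cmult a (E X m n)) (E Y m n).
Proof. apply (proj1 (proj2 HE)). Qed.

Lemma E_cp : completely_positive E.
Proof. unfold completely_positive. exact (proj1 (proj2 (proj2 HE))). Qed.

Lemma E_trace_le : forall X t t', trace_class X -> Defs.positive X ->
     has_trace X t -> has_trace (E X) t' -> Re t' <= Re t.
Proof. apply (proj2 (proj2 (proj2 HE))). Qed.

Lemma E_positive X : trace_class X -> Defs.positive X -> Defs.positive (E X).
Proof. intros Ht Hp. apply (E_cp 1%nat (fun _ _ => X)); auto. Qed.

Lemma E_diag_le X t p : trace_class X -> Defs.positive X -> has_trace X t ->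
  E X p p = RtoC (Re (E X p p)) /\ 0 <= Re (E X p p) /\ Re (E X p p) <= Re t.
Proof. intros Htc Hp Ht. pose proof (E_positive X Htc Hp) as HEp.
 destruct (trace_exists (E X) (E_tc X Htc)) as [t' Ht'].
 pose proof (E_trace_le X t t' Htc Hp Ht Ht'). pose proof (positive_trace_le (E X) t' p HEp Ht').
 pose proof (positive_psd_matrix _ HEp) as Hm. split; [apply psd_real_diag; auto|]. split; [apply (psd_diag _ p Hm)|]. lra. Qed.

Lemma E_dyad_sum_diag a A p : sq_bounded a A -> E (dyad_sum a a) p p = RtoC (Re (E (dyad_sum a a) p p)) /\
  0 <= Re (E (dyad_sum a a) p p) /\ Re (E (dyad_sum a a) p p) <= A.
Proof. intros Ha. assert (Htc : trace_class (dyad_sum a a)) by (apply (dyad_sum_tc a a A A); auto).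
 destruct (trace_exists _ Htc) as [t Ht].
 assert (Hp : Defs.positive (dyad_sum a a)) by (apply (dyad_sum_psd_block (fun _ => a) A 1%nat); auto).
 destruct (E_diag_le _ t p Htc Hp Ht) as [H1 [H2 H3]]. pose proof (dyad_sum_trace_le a A t Ha Ht).
 split; auto. split; auto. lra. Qed.

Lemma fsum2 f : fsum 2 f = Cplus (f 0%nat) (f 1%nat).
Proof. simpl. ring. Qed.

Lemma qform_single_entry N (psi phi : nat -> C) (M : nat -> nat -> C) p0 q0 :
  (p0 < N)%nat -> (q0 < N)%nat -> (forall m, m <> p0 -> psi m = RtoC 0) -> (forall m, m <> q0 -> phi m = RtoC 0) ->
  fsum N (fun m => fsum N (fun n => Cmult (Cmult (Cconj (psi m)) (M m n)) (phi n))) =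
  Cmult (Cmult (Cconj (psi p0)) (M p0 q0)) (phi q0).
Proof. intros H1 H2 H3 H4. rewrite (fsum_single N _ p0).
 - destruct (Nat.ltb_spec p0 N); [|lia]. rewrite (fsum_single N _ q0).
   + destruct (Nat.ltb_spec q0 N); [reflexivity|lia].
   + intros n _ Hn. rewrite (H4 n Hn). ring.
 - intros m _ Hm. apply fsum_zero. intros n _. rewrite (H3 m Hm), RtoC_conj. ring. Qed.

(* Cauchy-Schwarz for the positive 2x2 block [E(|a><a|), E(|a><b|); E(|b><a|), E(|b><b|)]. *)
Lemma E_dyad_sum_bound a b A B p q : sq_bounded a A -> sq_bounded b B -> Cmod (E (dyad_sum a b) p q) ^ 2 <= A * B.
Proof. intros Ha Hb.
 set (w := fun i => if Nat.eqb i 0 then a else b).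
 assert (HA := sq_bounded_ge0 a A Ha). assert (HB := sq_bounded_ge0 b B Hb).
 assert (Hw : forall i, sq_bounded (w i) (A + B)) by (intros i; unfold w; destruct (Nat.eqb i 0); eapply sq_bounded_mono; eauto; lra).
 assert (Hpsd := E_cp 2%nat (fun i j => dyad_sum (w i) (w j)) (fun i j _ _ => dyad_sum_tc _ _ _ _ (Hw i) (Hw j)) (dyad_sum_psd_block w (A + B) 2%nat Hw)).
 assert (HQ : forall x y, exists r, 0 <= r /\
    qform2 (E (dyad_sum a a) p p) (E (dyad_sum a b) p q) (E (dyad_sum b a) q p) (E (dyad_sum b b) q q) x y = RtoC r).
 { intros x y.
   set (psi := fun i m => if Nat.eqb i 0 then (if Nat.eqb m p then x else RtoC 0) else (if Nat.eqb m q then y else RtoC 0)).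
   destruct (Hpsd psi (S (max p q))) as [r [Hr Eq]].
   { intros i m Hm. unfold psi. destruct (Nat.eqb i 0); [destruct (Nat.eqb_spec m p)|destruct (Nat.eqb_spec m q)]; auto; lia. }
   exists r. split; auto. rewrite <- Eq. rewrite !fsum2.
   assert (P0 : forall m, m <> p -> psi 0%nat m = RtoC 0) by (intros m Hm; unfold psi; simpl; destruct (Nat.eqb_spec m p); auto; contradiction).
   assert (P1 : forall m, m <> q -> psi 1%nat m = RtoC 0) by (intros m Hm; unfold psi; simpl; destruct (Nat.eqb_spec m q); auto; contradiction).
   rewrite !(qform_single_entry (S (max p q)) (psi 0%nat) (psi 0%nat) _ p p), !(qform_single_entry (S (max p q)) (psi 0%nat) (psi 1%nat) _ p q),
     !(qform_single_entry (S (max p q)) (psi 1%nat) (psi 0%nat) _ q p), !(qform_single_entry (S (max p q)) (psi 1%nat) (psi 1%nat) _ q q); auto; try lia.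
   unfold psi, w; simpl. rewrite !Nat.eqb_refl. unfold qform2. ring. }
 destruct (qform2_psd _ _ _ _ HQ) as [_ [_ [_ [_ [_ Hbb]]]]].
 destruct (E_dyad_sum_diag a A p Ha) as [_ [Ha1 Ha2]]. destruct (E_dyad_sum_diag b B q Hb) as [_ [Hb1 Hb2]].
 eapply Rle_trans; [exact Hbb|]. apply Rmult_le_compat; auto. Qed.

End Op.

(** * The Kraus coefficients *)

Lemma mat_unit_positive m0 : Defs.positive (mat_unit m0 m0).
Proof. intros psi N Hs. exists (if Nat.ltb m0 N then Cmod (psi 0%nat m0) ^ 2 else 0).
 split. destruct (Nat.ltb m0 N); [apply Cmod_sq_ge|lra].
 simpl. rewrite Cplus_0_l, Cplus_0_l.
 rewrite (fsum_single N _ m0).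
 - destruct (Nat.ltb_spec m0 N).
   + rewrite (fsum_single N _ m0).
     * destruct (Nat.ltb_spec m0 N); [|lia]. unfold mat_unit. rewrite Nat.eqb_refl. simpl.
       replace (Cmod (psi 0%nat m0) * (Cmod (psi 0%nat m0) * 1)) with (Cmod (psi 0%nat m0) ^ 2) by ring.
       rewrite <- Cconj_mult_self. ring.
     * intros n _ Hn. unfold mat_unit. destruct (Nat.eqb_spec n m0); [contradiction|]. rewrite andb_false_r. ring.
   + reflexivity.
 - intros m _ Hm. apply fsum_zero. intros n _. unfold mat_unit. destruct (Nat.eqb_spec m m0); [contradiction|]. simpl. ring. Qed.

Lemma mat_unit_trace m0 : has_trace (mat_unit m0 m0) (RtoC 1).
Proof. unfold has_trace. replace (RtoC 1) with (mat_unit m0 m0 m0 m0) by (unfold mat_unit; rewrite Nat.eqb_refl; reflexivity).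
 apply (has_sum_single Nat.eq_dec (fun n => mat_unit m0 m0 n n)). intros x Hx. unfold mat_unit.
 destruct (Nat.eqb_spec x m0); [contradiction|reflexivity]. Qed.

Section Kraus.
Variable E : op -> op.
Hypothesis HE : is_operation E.
Hypothesis HU : U1_invariant E.

(* The coefficient vectors [c^(k,al)] of the statement: the Cholesky vectors of the band [A_k]. *)
Definition kraus_coef (k : Z) (al m : nat) : C := chol_vec (choi_band E k) al m.

Lemma choi_band_psd k : psd_matrix (choi_band E k).
Proof. apply choi_band_psd_of_cp. apply E_cp; auto. Qed.

Lemma kraus_coef_zero k al m : (m < al)%nat -> kraus_coef k al m = RtoC 0.
Proof. intros H. apply chol_vec_zero; auto. apply choi_band_psd. Qed.

Lemma choi_band_decomp k m n K : (m < K)%nat -> choi_band E k m n = fsum K (fun al => Cmult (kraus_coef k al m) (Cconj (kraus_coef k al n))).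
Proof. intros H. apply chol_decomp; auto. apply choi_band_psd. Qed.

Lemma choi_band_diag k m : choi_band E k m m = RtoC (rsum (fun al => Cmod (kraus_coef k al m) ^ 2) (seq 0 (S m))).
Proof. rewrite (choi_band_decomp k m m (S m)) by lia. rewrite fsum_lsum, <- lsum_RtoC. apply lsum_ext. intros.
 rewrite Cmod2_conj. reflexivity. Qed.

Lemma choi_band_diag_le k m : Re (choi_band E k m m) <= 1.
Proof. unfold choi_band. destruct (zshift_ok m k && zshift_ok m k).
 - destruct (E_diag_le E HE (mat_unit m m) (RtoC 1) (zshift m k) (mat_unit_tc m m) (mat_unit_positive m) (mat_unit_trace m)) as [_ [_ H]].
   simpl in H. exact H.
 - simpl; lra. Qed.

Lemma kraus_coef_sum_le k m F : NoDup F -> rsum (fun al => Cmod (kraus_coef k al m) ^ 2) F <= Re (choi_band E k m m).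
Proof. intros HF. rewrite choi_band_diag, re_RtoC. apply rsum_sub_seq; auto. intros; apply Cmod_sq_ge.
 intros x Hx. rewrite kraus_coef_zero by lia. rewrite Cmod_0. ring. Qed.

Lemma E_mat_unit_entry m n p q : E (mat_unit m n) p q =
  if Nat.eqb (p + n) (q + m) then choi_band E (Z.of_nat p - Z.of_nat m) m n else RtoC 0.
Proof. destruct (Nat.eqb_spec (p + n) (q + m)) as [Heq|Hne].
 - unfold choi_band, zshift_ok, zshift.
   replace (Z.of_nat m + (Z.of_nat p - Z.of_nat m))%Z with (Z.of_nat p) by lia.
   replace (Z.of_nat n + (Z.of_nat p - Z.of_nat m))%Z with (Z.of_nat q) by lia.
   rewrite !Nat2Z.id. replace (0 <=? Z.of_nat p)%Z with true by (symmetry; apply Z.leb_le; lia).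
   replace (0 <=? Z.of_nat q)%Z with true by (symmetry; apply Z.leb_le; lia). reflexivity.
 - apply (U1_selection_rule E (E_lin E HE) HU). lia. Qed.

(* [kraus_term X k al p q = <p| K X K^dagger |q>] for [K = S_k diag (kraus_coef k al)]. *)
Definition kraus_term (X : op) (k : Z) (al : nat) (p q : nat) : C :=
  if zshift_ok p (- k) && zshift_ok q (- k) then
    Cmult (Cmult (kraus_coef k al (zshift p (- k))) (X (zshift p (- k)) (zshift q (- k)))) (Cconj (kraus_coef k al (zshift q (- k))))
  else RtoC 0.

Lemma sandwich_kraus_term X k al : sandwich (shift_diag k (kraus_coef k al)) X (fun p q => kraus_term X k al p q).
Proof. intros p q. unfold kraus_term.
 destruct (zshift_ok p (- k) && zshift_ok q (- k)) eqn:Hok.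
 - apply andb_prop in Hok. destruct Hok as [Hp Hq]. unfold zshift_ok in Hp, Hq. apply Z.leb_le in Hp. apply Z.leb_le in Hq.
   set (f := fun mn : nat * nat => Cmult (Cmult (shift_diag k (kraus_coef k al) p (fst mn)) (X (fst mn) (snd mn)))
               (Cconj (shift_diag k (kraus_coef k al) q (snd mn)))).
   replace (Cmult (Cmult (kraus_coef k al (zshift p (- k))) (X (zshift p (- k)) (zshift q (- k)))) (Cconj (kraus_coef k al (zshift q (- k)))))
     with (f (zshift p (- k), zshift q (- k))).
   + apply (has_sum_single nat_pair_dec f). intros [m n] Hne. unfold f, shift_diag, Defs.shift. simpl.
     destruct (Z.eqb_spec (Z.of_nat p) (Z.of_nat m + k)); destruct (Z.eqb_spec (Z.of_nat q) (Z.of_nat n + k)).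
     * exfalso. apply Hne. unfold zshift. f_equal; lia.
     * rewrite Cmult_0_l, RtoC_conj; ring.
     * ring.
     * ring.
   + unfold f, shift_diag, Defs.shift, zshift. simpl.
     rewrite !Z2Nat.id by lia.
     replace (Z.of_nat p =? Z.of_nat p + - k + k)%Z with true by (symmetry; apply Z.eqb_eq; lia).
     replace (Z.of_nat q =? Z.of_nat q + - k + k)%Z with true by (symmetry; apply Z.eqb_eq; lia).
     rewrite Cmult_conj, RtoC_conj. ring.
 - apply has_sum_ext with (fun _ => RtoC 0); [|apply has_sum_zero].
   intros [m n]. unfold shift_diag, Defs.shift. simpl.
   destruct (Z.eqb_spec (Z.of_nat p) (Z.of_nat m + k)); destruct (Z.eqb_spec (Z.of_nat q) (Z.of_nat n + k)).
   + exfalso. unfold zshift_ok in Hok. apply andb_false_iff in Hok. destruct Hok as [H|H]; apply Z.leb_gt in H; lia.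
   + rewrite Cmult_0_l, RtoC_conj; ring.
   + ring.
   + ring. Qed.

End Kraus.

Lemma has_sum_of_sup {I} (g : I -> R) s : (forall x, 0 <= g x) ->
  (forall F, NoDup F -> rsum g F <= s) -> (forall e, 0 < e -> exists F, NoDup F /\ s - e < rsum g F) ->
  has_sum (fun x => RtoC (g x)) (RtoC s).
Proof. intros Hg Hup Hlow e He. destruct (Hlow e He) as [F0 [HF0 Hlt]]. exists F0. intros F HF Hi.
 assert (rsum g F0 <= rsum g F) by (apply rsum_le_incl; auto).
 specialize (Hup F HF). rewrite lsum_RtoC, <- RtoC_minus, Cmod_R. apply Rabs_def1; lra. Qed.

Lemma rsum_reindex {A B} (h : A -> R) (g : B -> R) (phi : A -> B) F :
  NoDup F -> (forall x, 0 <= h x) ->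
  (forall x y, In x F -> In y F -> h x <> 0 -> h y <> 0 -> phi x = phi y -> x = y) ->
  (forall x, In x F -> h x <> 0 -> h x <= g (phi x)) ->
  exists G, NoDup G /\ rsum h F <= rsum g G /\ (forall y, In y G -> exists x, In x F /\ h x <> 0 /\ y = phi x).
Proof. intros HF Hh. induction HF as [|a F Ha HF IH]; intros Hinj Hle.
 - exists nil. split. constructor. split. unfold rsum; simpl; lra. intros y [].
 - destruct IH as [G [HG [Hs Himg]]].
   + intros x y Hx Hy; apply Hinj; simpl; auto.
   + intros x Hx; apply Hle; simpl; auto.
   + rewrite rsum_cons. destruct (Req_dec (h a) 0) as [E0|E0].
     * exists G. split; auto. split; [lra|]. intros y Hy. destruct (Himg y Hy) as [x [Hx [Hx' ->]]].
       exists x; split; simpl; auto.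
     * exists (phi a :: G). split; [|split].
       -- constructor; auto. intros Hin. destruct (Himg _ Hin) as [x [Hx [Hx' Heq]]].
          assert (a = x) by (apply Hinj; simpl; auto). subst; contradiction.
       -- rewrite rsum_cons. pose proof (Hle a (or_introl eq_refl) E0). lra.
       -- intros y [<-|Hy]. exists a; simpl; auto. destruct (Himg y Hy) as [x [Hx [Hx' ->]]]. exists x; simpl; auto. Qed.

Section Norm.
Variable E : op -> op.
Hypothesis HE : is_operation E.
Hypothesis HU : U1_invariant E.

Lemma zshift_inj n k1 k2 : zshift_ok n k1 = true -> zshift_ok n k2 = true -> zshift n k1 = zshift n k2 -> k1 = k2.
Proof. unfold zshift_ok, zshift. intros H1 H2 H. apply Z.leb_le in H1. apply Z.leb_le in H2. lia. Qed.

Lemma choi_band_diag_ok k n : Re (choi_band E k n n) <> 0 -> zshift_ok n k = true.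
Proof. intros H. destruct (zshift_ok n k) eqn:Ho; auto. exfalso; apply H. unfold choi_band. rewrite Ho. reflexivity. Qed.

Lemma E_mat_unit_diag n p : E (mat_unit n n) p p = choi_band E (Z.of_nat p - Z.of_nat n) n n.
Proof. rewrite (E_mat_unit_entry E HE HU), Nat.eqb_refl. reflexivity. Qed.

Lemma E_mat_unit_trace_re n t : has_trace (E (mat_unit n n)) t ->
  has_sum (fun p => RtoC (Re (E (mat_unit n n) p p))) t /\
  forall F, NoDup F -> rsum (fun p => Re (E (mat_unit n n) p p)) F <= Re t.
Proof. intros Ht.
 assert (Hd : forall p, E (mat_unit n n) p p = RtoC (Re (E (mat_unit n n) p p)) /\ 0 <= Re (E (mat_unit n n) p p))
   by (intros p; destruct (E_diag_le E HE (mat_unit n n) (RtoC 1) p (mat_unit_tc n n) (mat_unit_positive n)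
        (mat_unit_trace n)) as [H1 [H2 _]]; auto).
 assert (Ht' : has_sum (fun p => RtoC (Re (E (mat_unit n n) p p))) t)
   by (apply has_sum_ext with (fun p => E (mat_unit n n) p p); [intros p; apply Hd|exact Ht]).
 split; auto. apply (has_sum_nonneg_le Nat.eq_dec _ _ (fun p => proj2 (Hd p)) Ht'). Qed.

Lemma kraus_coef_sq_sum_le n t : has_trace (E (mat_unit n n)) t -> forall G, NoDup G ->
  rsum (fun ka : Z * nat => Cmod (kraus_coef E (fst ka) (snd ka) n) ^ 2) G <= Re t.
Proof. intros Ht. destruct (E_mat_unit_trace_re n t Ht) as [_ Hle].
 assert (Hh0 : forall k, 0 <= Re (choi_band E k n n)).
 { intros k. rewrite choi_band_diag by auto. rewrite re_RtoC. apply rsum_nonneg; intros; apply Cmod_sq_ge. }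
 apply (pairs_bound Z.eq_dec Nat.eq_dec (fun ka => Cmod (kraus_coef E (fst ka) (snd ka) n) ^ 2)).
 { intros; apply Cmod_sq_ge. }
 intros Fk Fa HFk HFa. simpl.
 eapply Rle_trans; [apply rsum_le; intros k _; apply (kraus_coef_sum_le E HE k n Fa HFa)|].
 destruct (rsum_reindex (fun k => Re (choi_band E k n n)) (fun p => Re (E (mat_unit n n) p p)) (zshift n) Fk HFk Hh0)
   as [G [HG [Hs _]]].
 - intros x y _ _ Hx Hy Hxy. apply (zshift_inj n); auto using choi_band_diag_ok.
 - intros x _ Hx. pose proof (choi_band_diag_ok x n Hx) as Ho.
   rewrite E_mat_unit_diag. right. do 3 f_equal. unfold zshift, zshift_ok in *. apply Z.leb_le in Ho. lia.
 - eapply Rle_trans; [exact Hs|]. apply Hle; auto. Qed.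

Lemma kraus_coef_sq_sum_approx n t : has_trace (E (mat_unit n n)) t -> forall e, 0 < e ->
  exists G, NoDup G /\ Re t - e < rsum (fun ka : Z * nat => Cmod (kraus_coef E (fst ka) (snd ka) n) ^ 2) G.
Proof. intros Ht e He. destruct (E_mat_unit_trace_re n t Ht) as [Ht' _].
 destruct (Ht' e He) as [F0 H0]. set (P0 := nodup Nat.eq_dec F0).
 specialize (H0 P0 (NoDup_nodup _ _) (fun x Hx => proj2 (nodup_In _ _ _) Hx)).
 rewrite lsum_RtoC in H0. pose proof (re_le_Cmod (Cminus (RtoC (rsum (fun p => Re (E (mat_unit n n) p p)) P0)) t)).
 rewrite Re_minus, re_RtoC in H. apply Rabs_le_between in H.
 exists (list_prod (map (fun p => (Z.of_nat p - Z.of_nat n)%Z) P0) (seq 0 (S n))). split.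
 - apply NoDup_list_prod; [|apply seq_NoDup]. apply NoDup_map_inj; [intros x y Hxy; lia|apply NoDup_nodup].
 - rewrite (rsum_prod (fun k al => Cmod (kraus_coef E k al n) ^ 2)), rsum_map.
   rewrite (rsum_ext _ (fun p => Re (E (mat_unit n n) p p))); [lra|].
   intros p _. rewrite E_mat_unit_diag, choi_band_diag by auto. rewrite re_RtoC. reflexivity. Qed.

(* The coefficients of [|n>] sum to [tr E(|n><n|)]: summing the Cholesky factorisations of the diagonal
   entries [<n+k| E(|n><n|) |n+k>] over [k]. *)
Lemma kraus_coef_norm n : exists s : R,
  has_sum (fun ka : Z * nat => RtoC (Cmod (kraus_coef E (fst ka) (snd ka) n) ^ 2)) (RtoC s)
  /\ s <= 1 /\ (trace_preserving E -> s = 1).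
Proof.
 destruct (trace_exists _ (E_tc E HE _ (mat_unit_tc n n))) as [t Ht].
 exists (Re t). split; [|split].
 - apply has_sum_of_sup; [intros; apply Cmod_sq_ge| |].
   + apply (kraus_coef_sq_sum_le n t Ht).
   + apply (kraus_coef_sq_sum_approx n t Ht).
 - apply (E_trace_le E HE (mat_unit n n) (RtoC 1) t (mat_unit_tc n n) (mat_unit_positive n) (mat_unit_trace n) Ht).
 - intros Htp. pose proof (Htp (mat_unit n n) (RtoC 1) (mat_unit_tc n n) (mat_unit_trace n)) as H1.
   rewrite (has_sum_unique Nat.eq_dec _ _ _ Ht H1). reflexivity. Qed.

End Norm.

(** * Convergence of the Kraus expansion *)

Definition head_coords (N : nat) (a : nat -> nat -> C) : nat -> nat -> C := fun i m => if Nat.ltb m N then a i m else RtoC 0.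
Definition tail_coords (N : nat) (a : nat -> nat -> C) : nat -> nat -> C := fun i m => if Nat.ltb m N then RtoC 0 else a i m.

Lemma sq_bounded_le a a' A : sq_bounded a A -> (forall i m, Cmod (a' i m) <= Cmod (a i m)) -> sq_bounded a' A.
Proof. intros H Hle G HG. eapply Rle_trans; [|apply (H G HG)]. apply rsum_le. intros x _.
 pose proof (Hle (fst x) (snd x)). pose proof (Cmod_ge_0 (a' (fst x) (snd x))). simpl. nra. Qed.

Lemma sq_bounded_head N a A : sq_bounded a A -> sq_bounded (head_coords N a) A.
Proof. intros H; apply (sq_bounded_le a); auto. intros i m; unfold head_coords; destruct (Nat.ltb m N); [lra|rewrite Cmod_0; apply Cmod_ge_0]. Qed.

Lemma sq_bounded_tail N a A : sq_bounded a A -> sq_bounded (tail_coords N a) A.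
Proof. intros H; apply (sq_bounded_le a); auto. intros i m; unfold tail_coords; destruct (Nat.ltb m N); [rewrite Cmod_0; apply Cmod_ge_0|lra]. Qed.

Lemma list_strict_ub (l : list nat) : exists M, forall x, In x l -> (x < M)%nat.
Proof. induction l as [|a l [M HM]]. exists 0%nat; intros x []. exists (S (max a M)). intros x [<-|Hx]. lia. specialize (HM x Hx). lia. Qed.

Lemma sq_bounded_tail_small a A : sq_bounded a A -> forall d, 0 < d -> exists N0, forall N, (N0 <= N)%nat -> sq_bounded (tail_coords N a) d.
Proof. intros H d Hd.
 set (g := fun x : nat * nat => Cmod (a (fst x) (snd x)) ^ 2).
 destruct (has_sum_sup g A) as [s [Hs _]]. intros; apply Cmod_sq_ge. exact H.
 destruct (has_sum_nonneg_tail nat_pair_dec g _ (fun x => Cmod_sq_ge _) Hs d Hd) as [F0 HF0].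
 destruct (list_strict_ub (map snd F0)) as [N0 HN0]. exists N0. intros N HN G HG.
 set (G' := filter (fun x => negb (Nat.ltb (snd x) N)) G).
 apply (Rle_trans _ (rsum g G')).
 - apply (Rle_trans _ (rsum (fun x => Cmod (tail_coords N a (fst x) (snd x)) ^ 2) G')).
   + apply rsum_le_incl; auto. intros; apply Cmod_sq_ge.
     intros x Hx Hnz. apply filter_In. split; auto. unfold tail_coords in Hnz. destruct (Nat.ltb (snd x) N); auto.
     exfalso; apply Hnz. rewrite Cmod_0; ring.
   + apply rsum_le. intros x Hx. apply filter_In in Hx. destruct Hx as [_ Hx].
     unfold tail_coords. destruct (Nat.ltb (snd x) N); [discriminate|]. unfold g; lra.
 - apply Rlt_le. apply HF0. apply NoDup_filter; auto.
   intros x Hx Hin. apply filter_In in Hx. destruct Hx as [_ Hx]. destruct (Nat.ltb_spec (snd x) N); [discriminate|].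
   assert (Hm : In (snd x) (map snd F0)) by (apply in_map; auto). specialize (HN0 _ Hm). lia. Qed.

Lemma dyad_sum_split_l a b A B N m n : sq_bounded a A -> sq_bounded b B ->
  dyad_sum a b m n = Cplus (dyad_sum (tail_coords N a) b m n) (dyad_sum (head_coords N a) b m n).
Proof. intros Ha Hb. apply (has_sum_unique Nat.eq_dec (fun i => Cmult (a i m) (Cconj (b i n)))).
 - apply (dyad_sum_has_sum a b A B); auto.
 - apply has_sum_ext with (fun i => Cplus (Cmult (tail_coords N a i m) (Cconj (b i n))) (Cmult (head_coords N a i m) (Cconj (b i n)))).
   + intros i. unfold tail_coords, head_coords. destruct (Nat.ltb m N); ring.
   + apply has_sum_plus; apply (dyad_sum_has_sum _ _ A B); auto using sq_bounded_head, sq_bounded_tail. Qed.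

Lemma dyad_sum_split_r a b A B N m n : sq_bounded a A -> sq_bounded b B ->
  dyad_sum (head_coords N a) b m n = Cplus (dyad_sum (head_coords N a) (head_coords N b) m n) (dyad_sum (head_coords N a) (tail_coords N b) m n).
Proof. intros Ha Hb. apply (has_sum_unique Nat.eq_dec (fun i => Cmult (head_coords N a i m) (Cconj (b i n)))).
 - apply (dyad_sum_has_sum _ b A B); auto using sq_bounded_head.
 - apply has_sum_ext with (fun i => Cplus (Cmult (head_coords N a i m) (Cconj (head_coords N b i n))) (Cmult (head_coords N a i m) (Cconj (tail_coords N b i n)))).
   + intros i. unfold tail_coords, head_coords. destruct (Nat.ltb m N); destruct (Nat.ltb n N); rewrite ?RtoC_conj; ring.
   + apply has_sum_plus; apply (dyad_sum_has_sum _ _ A B); auto using sq_bounded_head, sq_bounded_tail. Qed.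

Lemma dyad_sum_trunc a b A B N m n : sq_bounded a A -> sq_bounded b B -> dyad_sum (head_coords N a) (head_coords N b) m n = trunc N (dyad_sum a b) m n.
Proof. intros Ha Hb. apply (has_sum_unique Nat.eq_dec (fun i => Cmult (head_coords N a i m) (Cconj (head_coords N b i n)))).
 - apply (dyad_sum_has_sum _ _ A B); auto using sq_bounded_head.
 - unfold trunc, head_coords. destruct (Nat.ltb m N); destruct (Nat.ltb n N); simpl.
   + apply (dyad_sum_has_sum a b A B); auto.
   + apply has_sum_ext with (fun _ => RtoC 0); [intros; rewrite RtoC_conj; ring|apply has_sum_zero].
   + apply has_sum_ext with (fun _ => RtoC 0); [intros; ring|apply has_sum_zero].
   + apply has_sum_ext with (fun _ => RtoC 0); [intros; ring|apply has_sum_zero]. Qed.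

Lemma pow2_lt_reg x y : 0 <= x -> 0 < y -> x ^ 2 < y ^ 2 -> x < y.
Proof. intros. nra. Qed.

Lemma E_trunc_approx (E : op -> op) (HE : is_operation E) a b A B p q : sq_bounded a A -> sq_bounded b B ->
  forall e, 0 < e -> exists N0, forall N, (N0 <= N)%nat ->
    Cmod (Cminus (E (dyad_sum a b) p q) (E (trunc N (dyad_sum a b)) p q)) < e.
Proof. intros Ha Hb e He.
 assert (HA := sq_bounded_ge0 a A Ha). assert (HB := sq_bounded_ge0 b B Hb).
 set (d := (e / 2) ^ 2 / (A + B + 1) / 2).
 assert (Hd : 0 < d) by (unfold d; apply Rdiv_lt_0_compat; [apply Rdiv_lt_0_compat; [nra|lra]|lra]).
 assert (Hd2 : d * (A + B + 1) < (e / 2) ^ 2) by (unfold d; field_simplify; [nra|lra]).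
 destruct (sq_bounded_tail_small a A Ha d Hd) as [N1 H1]. destruct (sq_bounded_tail_small b B Hb d Hd) as [N2 H2].
 exists (max N1 N2). intros N HN.
 assert (Ea : forall m n, dyad_sum a b m n = op_add (dyad_sum (tail_coords N a) b) (dyad_sum (head_coords N a) b) m n) by (intros; apply (dyad_sum_split_l a b A B); auto).
 assert (Eb : forall m n, dyad_sum (head_coords N a) b m n = op_add (dyad_sum (head_coords N a) (head_coords N b)) (dyad_sum (head_coords N a) (tail_coords N b)) m n) by (intros; apply (dyad_sum_split_r a b A B); auto).
 assert (tc1 : trace_class (dyad_sum (tail_coords N a) b)) by (apply (dyad_sum_tc _ _ A B); auto using sq_bounded_tail).
 assert (tc2 : trace_class (dyad_sum (head_coords N a) b)) by (apply (dyad_sum_tc _ _ A B); auto using sq_bounded_head).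
 assert (tc3 : trace_class (dyad_sum (head_coords N a) (head_coords N b))) by (apply (dyad_sum_tc _ _ A B); auto using sq_bounded_head).
 assert (tc4 : trace_class (dyad_sum (head_coords N a) (tail_coords N b))) by (apply (dyad_sum_tc _ _ A B); auto using sq_bounded_head, sq_bounded_tail).
 rewrite (E_ext E _ _ p q Ea). rewrite (E_add E (E_lin E HE)) by auto.
 rewrite (E_ext E _ _ p q Eb). rewrite (E_add E (E_lin E HE)) by auto.
 rewrite (E_ext E (dyad_sum (head_coords N a) (head_coords N b)) (trunc N (dyad_sum a b)) p q) by (intros; apply (dyad_sum_trunc a b A B); auto).
 replace (Cminus (Cplus (E (dyad_sum (tail_coords N a) b) p q) (Cplus (E (trunc N (dyad_sum a b)) p q) (E (dyad_sum (head_coords N a) (tail_coords N b)) p q)))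
   (E (trunc N (dyad_sum a b)) p q)) with (Cplus (E (dyad_sum (tail_coords N a) b) p q) (E (dyad_sum (head_coords N a) (tail_coords N b)) p q)) by ring.
 eapply Rle_lt_trans; [apply Cmod_triangle|].
 pose proof (E_dyad_sum_bound E HE (tail_coords N a) b d B p q (H1 N ltac:(lia)) Hb) as B1.
 pose proof (E_dyad_sum_bound E HE (head_coords N a) (tail_coords N b) A d p q (sq_bounded_head N a A Ha) (H2 N ltac:(lia))) as B2.
 assert (Cmod (E (dyad_sum (tail_coords N a) b) p q) < e / 2).
 { apply pow2_lt_reg; [apply Cmod_ge_0|lra|]. eapply Rle_lt_trans; [exact B1|]. nra. }
 assert (Cmod (E (dyad_sum (head_coords N a) (tail_coords N b)) p q) < e / 2).
 { apply pow2_lt_reg; [apply Cmod_ge_0|lra|]. eapply Rle_lt_trans; [exact B2|]. nra. }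
 lra. Qed.

Lemma lsum_filter {I} (f : I -> bool) (g : I -> C) L :
  lsum (fun x => if f x then g x else RtoC 0) L = lsum g (filter f L).
Proof. induction L; simpl. reflexivity. rewrite lsum_cons. destruct (f a); rewrite ?lsum_cons, IHL; ring. Qed.

Section Block.
Variable E : op -> op.
Hypothesis HE : is_operation E.
Hypothesis HU : U1_invariant E.
Variable X : op.
Variables p q : nat.

Definition charge : Z := (Z.of_nat q - Z.of_nat p)%Z.
Definition block_row_ok (N m : nat) : bool := zshift_ok m charge && Nat.ltb (zshift m charge) N.
Definition block_shifts (N : nat) : list Z := map (fun m => (Z.of_nat p - Z.of_nat m)%Z) (filter (block_row_ok N) (seq 0 N)).
(* The pairs [(k, al)], [al < N], whose Kraus terms at [(p, q)] only read entries of [trunc N X]. *)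
Definition block (N : nat) : list (Z * nat) := list_prod (block_shifts N) (seq 0 N).

Lemma E_mat_unit_entry_nz m n : E (mat_unit m n) p q <> RtoC 0 -> zshift_ok m charge = true /\ n = zshift m charge.
Proof. intros H. rewrite (E_mat_unit_entry E HE HU) in H. destruct (Nat.eqb_spec (p + n) (q + m)) as [Heq|]; [|contradiction].
 unfold zshift_ok, zshift, charge. split. apply Z.leb_le; lia. lia. Qed.

Lemma kraus_term_at m al : zshift_ok m charge = true ->
  kraus_term E X (Z.of_nat p - Z.of_nat m) al p q =
  Cmult (Cmult (kraus_coef E (Z.of_nat p - Z.of_nat m) al m) (X m (zshift m charge))) (Cconj (kraus_coef E (Z.of_nat p - Z.of_nat m) al (zshift m charge))).
Proof. intros Hok. unfold kraus_term.
 assert (E1 : (Z.of_nat p + - (Z.of_nat p - Z.of_nat m))%Z = Z.of_nat m) by lia.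
 assert (E2 : (Z.of_nat q + - (Z.of_nat p - Z.of_nat m))%Z = (Z.of_nat m + charge)%Z) by (unfold charge; lia).
 unfold zshift_ok at 1 2, zshift at 1 2 3 4. rewrite E1, E2. rewrite Nat2Z.id.
 unfold zshift_ok in Hok. rewrite Hok. replace (0 <=? Z.of_nat m)%Z with true by (symmetry; apply Z.leb_le; lia).
 reflexivity. Qed.

(* Linearity on the matrix units of [trunc N X], then the Cholesky factorisation of each band. *)
Lemma block_sum N : lsum (fun ka => kraus_term E X (fst ka) (snd ka) p q) (block N) = E (trunc N X) p q.
Proof.
 rewrite (E_ext E _ _ p q (fun a b => trunc_unit_comb N X a b)).
 rewrite (E_unit_comb E (E_lin E HE)).
 rewrite (lsum_prod (fun m n => Cmult (X m n) (E (mat_unit m n) p q))).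
 rewrite (lsum_ext _ (fun m => if block_row_ok N m then Cmult (X m (zshift m charge)) (choi_band E (Z.of_nat p - Z.of_nat m) m (zshift m charge)) else RtoC 0)).
 - rewrite lsum_filter. unfold block, block_shifts. rewrite (lsum_prod (fun k al => kraus_term E X k al p q)). rewrite lsum_map.
   apply lsum_ext. intros m Hm. apply filter_In in Hm. destruct Hm as [Hm Hc]. apply in_seq in Hm.
   unfold block_row_ok in Hc. apply andb_prop in Hc. destruct Hc as [Hok _].
   rewrite (lsum_ext _ (fun al => Cmult (X m (zshift m charge)) (Cmult (kraus_coef E (Z.of_nat p - Z.of_nat m) al m) (Cconj (kraus_coef E (Z.of_nat p - Z.of_nat m) al (zshift m charge)))))).
   + rewrite lsum_scal. f_equal. rewrite (choi_band_decomp E HE (Z.of_nat p - Z.of_nat m) m (zshift m charge) N) by lia.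
     symmetry; apply fsum_lsum.
   + intros al _. rewrite kraus_term_at by auto. ring.
 - intros m Hm. rewrite (lsum_single Nat.eq_dec _ _ (zshift m charge)).
   + unfold block_row_ok. destruct (zshift_ok m charge) eqn:Hok.
     * destruct (in_dec Nat.eq_dec (zshift m charge) (seq 0 N)) as [Hi|Hi].
       -- apply in_seq in Hi. destruct (Nat.ltb_spec (zshift m charge) N); [|lia]. simpl.
          rewrite (E_mat_unit_entry E HE HU). destruct (Nat.eqb_spec (p + zshift m charge) (q + m)); [reflexivity|].
          exfalso. unfold zshift_ok, zshift, charge in *. apply Z.leb_le in Hok. lia.
       -- destruct (Nat.ltb_spec (zshift m charge) N); [|reflexivity]. exfalso; apply Hi, in_seq; lia.
     * simpl. destruct (in_dec Nat.eq_dec (zshift m charge) (seq 0 N)); [|reflexivity].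
       destruct (classic (E (mat_unit m (zshift m charge)) p q = RtoC 0)) as [Z0|Z0].
       -- rewrite Z0; ring.
       -- apply E_mat_unit_entry_nz in Z0. destruct Z0 as [Z0 _]. congruence.
   + apply seq_NoDup.
   + intros n _ Hn. destruct (classic (E (mat_unit m n) p q = RtoC 0)) as [Z0|Z0].
     * rewrite Z0; ring.
     * apply E_mat_unit_entry_nz in Z0. destruct Z0 as [_ Z0]. contradiction. Qed.

End Block.

Definition col_norm2 (a : nat -> nat -> C) m : R := Re (hsum (fun i => RtoC (Cmod (a i m) ^ 2))).

Lemma col_norm2_spec a A m : sq_bounded a A ->
  has_sum (fun i => RtoC (Cmod (a i m) ^ 2)) (RtoC (col_norm2 a m)) /\ 0 <= col_norm2 a m /\
  (forall G, NoDup G -> rsum (fun i => Cmod (a i m) ^ 2) G <= col_norm2 a m).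
Proof. intros Ha.
 destruct (has_sum_sup (fun i => Cmod (a i m) ^ 2) A) as [s [Hs _]].
 intros; apply Cmod_sq_ge. intros F HF; apply (sq_bounded_col a A m F Ha HF).
 assert (H := hsum_spec _ (ex_intro _ _ Hs)).
 destruct (has_sum_nonneg_le Nat.eq_dec _ _ (fun i => Cmod_sq_ge (a i m)) H) as [Him Hle].
 unfold col_norm2. rewrite <- (C_real _ Him). split; auto. split; auto.
 specialize (Hle nil (NoDup_nil _)). change (rsum (fun i => Cmod (a i m) ^ 2) nil) with 0 in Hle. lra. Qed.

Lemma col_norm2_sum a A F : sq_bounded a A -> NoDup F -> rsum (col_norm2 a) F <= A.
Proof. intros Ha HF.
 assert (H : has_sum (fun i => lsum (fun m => RtoC (Cmod (a i m) ^ 2)) F) (lsum (fun m => RtoC (col_norm2 a m)) F)).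
 { apply has_sum_lsum. intros; apply (col_norm2_spec a A j Ha). }
 rewrite lsum_RtoC in H. replace (rsum (col_norm2 a) F) with (Re (RtoC (rsum (col_norm2 a) F))) by reflexivity.
 apply (has_sum_re_bound Nat.eq_dec _ _ _ H). intros G HG.
 rewrite (lsum_ext _ (fun i => RtoC (rsum (fun m => Cmod (a i m) ^ 2) F))) by (intros; apply lsum_RtoC).
 rewrite lsum_RtoC. simpl.
 apply (pairs_prod (fun p => Cmod (a (fst p) (snd p)) ^ 2) A G F Ha HG HF). Qed.

Lemma col_norm2_tail a A : sq_bounded a A -> forall d, 0 < d -> exists N0, forall F, NoDup F ->
  (forall m, In m F -> (N0 <= m)%nat) -> rsum (col_norm2 a) F < d.
Proof. intros Ha d Hd.
 assert (Hg : forall m, 0 <= col_norm2 a m) by (intros; apply (col_norm2_spec a A m Ha)).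
 destruct (has_sum_sup (col_norm2 a) A Hg (fun F HF => col_norm2_sum a A F Ha HF)) as [s [Hs _]].
 destruct (has_sum_nonneg_tail Nat.eq_dec _ _ Hg Hs d Hd) as [F0 HF0].
 destruct (list_strict_ub F0) as [N0 HN0]. exists N0. intros F HF Hge. apply HF0; auto.
 intros m Hm Hin. specialize (HN0 m Hin). specialize (Hge m Hm). lia. Qed.

Lemma amgm_weighted s x y : 0 < s -> x * y <= (s * x ^ 2 + y ^ 2 / s) / 2.
Proof. intros Hs. assert (0 <= (s * x - y) ^ 2) by apply pow2_ge_0.
 assert ((s * x ^ 2 + y ^ 2 / s) / 2 - x * y = (s * x - y) ^ 2 / (2 * s)) by (field; lra).
 assert (0 <= (s * x - y) ^ 2 / (2 * s)) by (apply Rdiv_le_0_compat; lra). lra. Qed.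

Lemma pairs_le {A B} (decA : forall x y : A, {x = y} + {x <> y}) (decB : forall x y : B, {x = y} + {x <> y})
  (g : A * B -> R) G : (forall x, 0 <= g x) -> NoDup G ->
  rsum g G <= rsum (fun i => rsum (fun m => g (i, m)) (nodup decB (map snd G))) (nodup decA (map fst G)).
Proof. intros Hg HG. rewrite <- (rsum_prod (fun i m => g (i,m))).
 replace (fun p : A * B => g (fst p, snd p)) with g by (apply functional_extensionality; intros [x y]; reflexivity).
 apply rsum_le_incl; auto. intros [i m] Hx _. simpl. apply in_prod_iff; split; apply nodup_In.
 - change i with (fst (i,m)); apply in_map; auto.
 - change m with (snd (i,m)); apply in_map; auto. Qed.

Section Tail.
Variable E : op -> op.
Hypothesis HE : is_operation E.

Lemma weighted_coef_sum_le (phi : Z -> nat) (P : Z -> bool) (W : nat -> R) M S :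
  (forall m, 0 <= W m) -> NoDup S ->
  (forall k1 k2, P k1 = true -> P k2 = true -> phi k1 = phi k2 -> k1 = k2) ->
  (forall G, NoDup G -> (forall y, In y G -> exists k, P k = true /\ y = phi k) -> rsum W G <= M) ->
  rsum (fun x => if P (fst x) then Cmod (kraus_coef E (fst x) (snd x) (phi (fst x))) ^ 2 * W (phi (fst x)) else 0) S
    <= M.
Proof. intros HW HS Hinj HM.
 set (h := fun k => if P k then W (phi k) else 0).
 assert (Hh : forall k, 0 <= h k) by (intros; unfold h; destruct (P k); auto; lra).
 destruct (rsum_reindex h W phi (nodup Z.eq_dec (map fst S)) (NoDup_nodup _ _) Hh) as [G [HG [Hs Himg]]].
 - intros x y _ _ Hx Hy Hxy. unfold h in Hx, Hy.
   destruct (P x) eqn:Ex; [|exfalso; apply Hx; reflexivity].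
   destruct (P y) eqn:Ey; [|exfalso; apply Hy; reflexivity].
   apply Hinj; auto.
 - intros x _ Hx. unfold h in *. destruct (P x); [lra|exfalso; apply Hx; reflexivity].
 - eapply Rle_trans; [|apply (HM G HG)].
   + eapply Rle_trans; [apply (pairs_le Z.eq_dec Nat.eq_dec)|]; auto.
     * intros x. destruct (P (fst x)); [|lra]. apply Rmult_le_pos; auto. apply Cmod_sq_ge.
     * eapply Rle_trans; [|exact Hs]. apply rsum_le. intros k _. simpl. unfold h. destruct (P k).
       -- rewrite (rsum_ext _ (fun al => W (phi k) * Cmod (kraus_coef E k al (phi k)) ^ 2)) by (intros; ring).
          rewrite rsum_scal.
          pose proof (kraus_coef_sum_le E HE k (phi k) _ (NoDup_nodup Nat.eq_dec (map snd S))).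
          pose proof (choi_band_diag_le E HE k (phi k)). pose proof (HW (phi k)).
          assert (0 <= rsum (fun al => Cmod (kraus_coef E k al (phi k)) ^ 2) (nodup Nat.eq_dec (map snd S)))
            by (apply rsum_nonneg; intros; apply Cmod_sq_ge).
          nra.
       -- rewrite rsum_zero; auto. lra.
   + intros y Hy. destruct (Himg y Hy) as [x [_ [Hx ->]]]. exists x. unfold h in Hx.
     destruct (P x); [auto|exfalso; apply Hx; reflexivity]. Qed.

Variables a b : nat -> nat -> C.
Variables A B : R.
Hypothesis Ha : sq_bounded a A.
Hypothesis Hb : sq_bounded b B.
Variables p q : nat.

Definition term_ok (k : Z) : bool := zshift_ok p (- k) && zshift_ok q (- k).
Definition term_row (k : Z) : nat := zshift p (- k).
Definition term_col (k : Z) : nat := zshift q (- k).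

Definition row_weight (x : Z * nat) : R :=
  if term_ok (fst x)
  then Cmod (kraus_coef E (fst x) (snd x) (term_row (fst x))) ^ 2 * col_norm2 a (term_row (fst x)) else 0.
Definition col_weight (x : Z * nat) : R :=
  if term_ok (fst x)
  then Cmod (kraus_coef E (fst x) (snd x) (term_col (fst x))) ^ 2 * col_norm2 b (term_col (fst x)) else 0.

Lemma row_weight_ge0 x : 0 <= row_weight x.
Proof. unfold row_weight. destruct (term_ok (fst x)); [|lra].
 apply Rmult_le_pos; [apply Cmod_sq_ge|apply (col_norm2_spec a A _ Ha)]. Qed.

Lemma col_weight_ge0 x : 0 <= col_weight x.
Proof. unfold col_weight. destruct (term_ok (fst x)); [|lra].
 apply Rmult_le_pos; [apply Cmod_sq_ge|apply (col_norm2_spec b B _ Hb)]. Qed.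

Lemma kraus_term_bound s k al : 0 < s ->
  Cmod (kraus_term E (dyad_sum a b) k al p q) <= (s * row_weight (k, al) + col_weight (k, al) / s) / 2.
Proof. intros Hs. unfold row_weight, col_weight, kraus_term, term_ok, term_row, term_col; simpl fst; simpl snd.
 destruct (zshift_ok p (- k) && zshift_ok q (- k)); [|rewrite Cmod_0; unfold Rdiv; lra].
 set (m := zshift p (- k)). set (n := zshift q (- k)). set (z1 := kraus_coef E k al m). set (z2 := kraus_coef E k al n).
 assert (H : has_sum (fun i => Cmult (Cmult z1 (Cconj z2)) (Cmult (a i m) (Cconj (b i n))))
        (Cmult (Cmult z1 (Cconj z2)) (dyad_sum a b m n))).
 { apply has_sum_scal. apply (dyad_sum_has_sum a b A B); auto. }
 replace (Cmult (Cmult z1 (dyad_sum a b m n)) (Cconj z2)) with (Cmult (Cmult z1 (Cconj z2)) (dyad_sum a b m n)) by ring.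
 apply (has_sum_bound Nat.eq_dec _ _ _ H). intros G HG.
 eapply Rle_trans; [apply Cmod_lsum|].
 destruct (col_norm2_spec a A m Ha) as [_ [_ Hca]]. destruct (col_norm2_spec b B n Hb) as [_ [_ Hcb]].
 specialize (Hca G HG). specialize (Hcb G HG).
 eapply Rle_trans.
 - apply (rsum_le _ (fun i => (s * Cmod z1 ^ 2 * Cmod (a i m) ^ 2 + Cmod z2 ^ 2 * Cmod (b i n) ^ 2 / s) / 2)).
   intros i _. rewrite !Cmod_mult, Cmod_conj, Cmod_conj.
   pose proof (amgm_weighted s (Cmod z1 * Cmod (a i m)) (Cmod z2 * Cmod (b i n)) Hs).
   replace ((s * Cmod z1 ^ 2 * Cmod (a i m) ^ 2 + Cmod z2 ^ 2 * Cmod (b i n) ^ 2 / s) / 2) with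
     ((s * (Cmod z1 * Cmod (a i m)) ^ 2 + (Cmod z2 * Cmod (b i n)) ^ 2 / s) / 2) by (field; lra).
   replace (Cmod z1 * Cmod z2 * (Cmod (a i m) * Cmod (b i n)))
     with ((Cmod z1 * Cmod (a i m)) * (Cmod z2 * Cmod (b i n))) by ring.
   exact H0.
 - unfold Rdiv. rewrite (rsum_ext _ (fun i => / 2 * (s * Cmod z1 ^ 2 * Cmod (a i m) ^ 2)
                                            + / 2 * (Cmod z2 ^ 2 * / s * Cmod (b i n) ^ 2))) by (intros; ring).
   rewrite rsum_plus, !rsum_scal.
   assert (0 <= s * Cmod z1 ^ 2) by (pose proof (Cmod_sq_ge z1); nra).
   assert (0 <= Cmod z2 ^ 2 * / s)
     by (pose proof (Cmod_sq_ge z2); apply Rmult_le_pos; [lra|apply Rlt_le, Rinv_0_lt_compat; lra]).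
   assert (s * Cmod z1 ^ 2 * rsum (fun i => Cmod (a i m) ^ 2) G <= s * Cmod z1 ^ 2 * col_norm2 a m)
     by (apply Rmult_le_compat_l; auto).
   assert (Cmod z2 ^ 2 * / s * rsum (fun i => Cmod (b i n) ^ 2) G <= Cmod z2 ^ 2 * / s * col_norm2 b n)
     by (apply Rmult_le_compat_l; auto).
   nra. Qed.

End Tail.

Definition Z_nat_dec : forall x y : Z * nat, {x = y} + {x <> y}.
Proof. decide equality; [apply Nat.eq_dec|apply Z.eq_dec]. Defined.

Section Final.
Variable E : op -> op.
Hypothesis HE : is_operation E.
Hypothesis HU : U1_invariant E.
Variables a b : nat -> nat -> C.
Variables A B : R.
Hypothesis Ha : sq_bounded a A.
Hypothesis Hb : sq_bounded b B.
Variables p q : nat.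

Lemma term_row_inj k1 k2 : term_ok p q k1 = true -> term_ok p q k2 = true -> term_row p k1 = term_row p k2 -> k1 = k2.
Proof. unfold term_ok, term_row, zshift_ok, zshift. intros H1 H2 H. apply andb_prop in H1. apply andb_prop in H2.
 destruct H1 as [H1 _]; destruct H2 as [H2 _]. apply Z.leb_le in H1. apply Z.leb_le in H2. lia. Qed.

Lemma term_col_inj k1 k2 : term_ok p q k1 = true -> term_ok p q k2 = true -> term_col q k1 = term_col q k2 -> k1 = k2.
Proof. unfold term_ok, term_col, zshift_ok, zshift. intros H1 H2 H. apply andb_prop in H1. apply andb_prop in H2.
 destruct H1 as [_ H1]; destruct H2 as [_ H2]. apply Z.leb_le in H1. apply Z.leb_le in H2. lia. Qed.

Lemma block_NoDup N : NoDup (block p q N).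
Proof. unfold block, block_shifts. apply NoDup_list_prod; [|apply seq_NoDup]. apply NoDup_map_inj.
 intros x y H; lia. apply NoDup_filter, seq_NoDup. Qed.

Lemma in_block k al N : term_ok p q k = true -> (term_row p k < N)%nat -> (term_col q k < N)%nat ->
  (al < N)%nat -> In (k, al) (block p q N).
Proof. intros Hv H1 H2 H3. unfold term_ok, term_row, term_col, zshift_ok, zshift in *.
 apply andb_prop in Hv. destruct Hv as [Hv1 Hv2]. apply Z.leb_le in Hv1. apply Z.leb_le in Hv2.
 unfold block, block_shifts. apply in_prod_iff. split; [|apply in_seq; lia].
 apply in_map_iff. exists (Z.to_nat (Z.of_nat p + - k)). split. lia.
 apply filter_In. split. apply in_seq; lia. unfold block_row_ok, zshift_ok, charge, zshift.
 apply andb_true_intro. split. apply Z.leb_le. lia. apply Nat.ltb_lt. lia. Qed.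

Lemma row_weight_sum S : NoDup S -> rsum (row_weight E a p q) S <= A.
Proof. intros HS. apply (weighted_coef_sum_le E HE (term_row p) (term_ok p q) (col_norm2 a)); auto.
 - intros m; apply (col_norm2_spec a A m Ha).
 - exact term_row_inj.
 - intros G HG _. apply col_norm2_sum; auto. Qed.

Lemma col_weight_sum S : NoDup S -> rsum (col_weight E b p q) S <= B.
Proof. intros HS. apply (weighted_coef_sum_le E HE (term_col q) (term_ok p q) (col_norm2 b)); auto.
 - intros m; apply (col_norm2_spec b B m Hb).
 - exact term_col_inj.
 - intros G HG _. apply col_norm2_sum; auto. Qed.

Definition far_row_weight (N : nat) (x : Z * nat) : R :=
  if Nat.leb N (term_row p (fst x)) then row_weight E a p q x else 0.
Definition far_col_weight (N : nat) (x : Z * nat) : R :=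
  if Nat.leb N (term_col q (fst x)) then col_weight E b p q x else 0.

Lemma far_row_weight_tail d : 0 < d ->
  exists N0, forall N, (N0 <= N)%nat -> forall S, NoDup S -> rsum (far_row_weight N) S <= d.
Proof. intros Hd. destruct (col_norm2_tail a A Ha d Hd) as [N0 H0]. exists N0. intros N HN S HS.
 rewrite (rsum_ext _ (fun x => if term_ok p q (fst x) && Nat.leb N (term_row p (fst x))
   then Cmod (kraus_coef E (fst x) (snd x) (term_row p (fst x))) ^ 2 * col_norm2 a (term_row p (fst x)) else 0)).
 2: { intros x _. unfold far_row_weight, row_weight.
      destruct (term_ok p q (fst x)), (Nat.leb N (term_row p (fst x))); reflexivity. }
 apply (weighted_coef_sum_le E HE (term_row p) (fun k => term_ok p q k && Nat.leb N (term_row p k)) (col_norm2 a) d S).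
 - intros m; apply (col_norm2_spec a A m Ha).
 - exact HS.
 - intros k1 k2 H1 H2. apply andb_prop in H1; apply andb_prop in H2. apply term_row_inj; tauto.
 - intros G HG Himg. apply Rlt_le, H0; auto. intros m Hm. destruct (Himg m Hm) as [k [Hk ->]].
   apply andb_prop in Hk. destruct Hk as [_ Hk]. apply Nat.leb_le in Hk. lia. Qed.

Lemma far_col_weight_tail d : 0 < d ->
  exists N0, forall N, (N0 <= N)%nat -> forall S, NoDup S -> rsum (far_col_weight N) S <= d.
Proof. intros Hd. destruct (col_norm2_tail b B Hb d Hd) as [N0 H0]. exists N0. intros N HN S HS.
 rewrite (rsum_ext _ (fun x => if term_ok p q (fst x) && Nat.leb N (term_col q (fst x))
   then Cmod (kraus_coef E (fst x) (snd x) (term_col q (fst x))) ^ 2 * col_norm2 b (term_col q (fst x)) else 0)).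
 2: { intros x _. unfold far_col_weight, col_weight.
      destruct (term_ok p q (fst x)), (Nat.leb N (term_col q (fst x))); reflexivity. }
 apply (weighted_coef_sum_le E HE (term_col q) (fun k => term_ok p q k && Nat.leb N (term_col q k)) (col_norm2 b) d S).
 - intros m; apply (col_norm2_spec b B m Hb).
 - exact HS.
 - intros k1 k2 H1 H2. apply andb_prop in H1; apply andb_prop in H2. apply term_col_inj; tauto.
 - intros G HG Himg. apply Rlt_le, H0; auto. intros m Hm. destruct (Himg m Hm) as [k [Hk ->]].
   apply andb_prop in Hk. destruct Hk as [_ Hk]. apply Nat.leb_le in Hk. lia. Qed.

(* Off the block, either an index of the term is large (weight it by [s], it is in the tail of [a] or [b]),
   or the term vanishes because [c^(k,al)] is supported on indices [>= al]. *)
Lemma kraus_term_off_block s N x : 0 < s -> ~ In x (block p q N) ->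
  Cmod (kraus_term E (dyad_sum a b) (fst x) (snd x) p q) <=
  (s * far_row_weight N x + row_weight E a p q x / s + col_weight E b p q x / s + s * far_col_weight N x) / 2.
Proof. intros Hs Hx. destruct x as [k al]. simpl fst; simpl snd.
 pose proof (row_weight_ge0 E a A Ha p q (k, al)) as Hr. pose proof (col_weight_ge0 E b B Hb p q (k, al)) as Hc.
 assert (0 <= row_weight E a p q (k, al) / s) by (apply Rdiv_le_0_compat; lra).
 assert (0 <= col_weight E b p q (k, al) / s) by (apply Rdiv_le_0_compat; lra).
 pose proof (kraus_term_bound E a b A B Ha Hb p q s k al Hs) as Hbd.
 unfold far_row_weight, far_col_weight; simpl fst.
 destruct (Nat.leb_spec N (term_row p k)) as [Hm|Hm].
 - destruct (Nat.leb N (term_col q k)); nra.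
 - destruct (Nat.leb_spec N (term_col q k)) as [Hn|Hn].
   + assert (Hs' : 0 < / s) by (apply Rinv_0_lt_compat; lra).
     pose proof (kraus_term_bound E a b A B Ha Hb p q (/ s) k al Hs') as Hbd'.
     unfold Rdiv in *. rewrite Rinv_inv in Hbd'. nra.
   + destruct (term_ok p q k) eqn:Hv.
     2: { unfold row_weight, col_weight in Hbd; simpl in Hbd. rewrite Hv in Hbd. unfold Rdiv in *. nra. }
     destruct (classic (kraus_coef E k al (term_row p k) = RtoC 0)) as [Z0|Z0].
     * unfold kraus_term. unfold term_ok, term_row in Hv, Z0. rewrite Hv, Z0, !Cmult_0_l, Cmod_0. nra.
     * exfalso. apply Hx, in_block; auto.
       destruct (Nat.le_gt_cases al (term_row p k)); [lia|]. exfalso; apply Z0, kraus_coef_zero; auto. Qed.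

Lemma kraus_term_tail : forall e, 0 < e -> exists N0, forall N, (N0 <= N)%nat -> forall S, NoDup S ->
  (forall x, In x S -> ~ In x (block p q N)) ->
  rsum (fun x => Cmod (kraus_term E (dyad_sum a b) (fst x) (snd x) p q)) S < e.
Proof. intros e He.
 assert (HA := sq_bounded_ge0 a A Ha). assert (HB := sq_bounded_ge0 b B Hb).
 set (s := 2 * (A + B + 1) / e). assert (Hs : 0 < s) by (unfold s; apply Rdiv_lt_0_compat; lra).
 set (d := e / (4 * s)). assert (Hd : 0 < d) by (unfold d; apply Rdiv_lt_0_compat; lra).
 destruct (far_row_weight_tail d Hd) as [N1 H1]. destruct (far_col_weight_tail d Hd) as [N2 H2].
 exists (max N1 N2). intros N HN S HS Hdis.
 apply (Rle_lt_trans _ (rsum (fun x => (s * far_row_weight N x + row_weight E a p q x / s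
                                      + col_weight E b p q x / s + s * far_col_weight N x) / 2) S)).
 { apply rsum_le. intros x Hx. apply kraus_term_off_block; auto. }
 unfold Rdiv. rewrite (rsum_ext _ (fun x => / 2 * s * far_row_weight N x + / 2 * / s * row_weight E a p q x
                                      + / 2 * / s * col_weight E b p q x + / 2 * s * far_col_weight N x))
   by (intros; ring).
 rewrite !rsum_plus, !rsum_scal.
 specialize (H1 N ltac:(lia) S HS). specialize (H2 N ltac:(lia) S HS).
 pose proof (row_weight_sum S HS). pose proof (col_weight_sum S HS).
 assert (Hsi : 0 < / s) by (apply Rinv_0_lt_compat; lra).
 assert (E1 : s * d = e / 4) by (unfold d; field; lra).
 assert (E2 : (A + B) * / s < e / 2).
 { unfold s. rewrite Rinv_div. apply (Rmult_lt_reg_r (2 * (A + B + 1))). lra.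
   replace ((A + B) * (e / (2 * (A + B + 1))) * (2 * (A + B + 1))) with ((A + B) * e) by (field; lra). nra. }
 nra. Qed.

Lemma kraus_term_has_sum : has_sum (fun ka => kraus_term E (dyad_sum a b) (fst ka) (snd ka) p q) (E (dyad_sum a b) p q).
Proof. intros e He.
 destruct (E_trunc_approx E HE a b A B p q Ha Hb (e / 2)) as [N1 H1]. lra.
 destruct (kraus_term_tail (e / 2)) as [N2 H2]. lra.
 set (N := max N1 N2). exists (block p q N). intros F HF Hi.
 destruct (nodup_split Z_nat_dec (block p q N) F) as [R [HP [HR HRn]]]; auto using block_NoDup.
 rewrite (lsum_perm _ _ _ HP), lsum_app, (block_sum E HE HU).
 specialize (H1 N ltac:(lia)). specialize (H2 N ltac:(lia) R HRn (fun x Hx => proj2 (HR x Hx))).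
 replace (Cminus (Cplus (E (trunc N (dyad_sum a b)) p q) (lsum (fun ka => kraus_term E (dyad_sum a b) (fst ka) (snd ka) p q) R)) (E (dyad_sum a b) p q))
   with (Cplus (lsum (fun ka => kraus_term E (dyad_sum a b) (fst ka) (snd ka) p q) R) (Copp (Cminus (E (dyad_sum a b) p q) (E (trunc N (dyad_sum a b)) p q)))) by ring.
 eapply Rle_lt_trans; [apply Cmod_triangle|]. rewrite Cmod_opp.
 pose proof (Cmod_lsum (fun ka => kraus_term E (dyad_sum a b) (fst ka) (snd ka) p q) R). lra. Qed.

End Final.

Theorem lemma2 (E : op -> op) :
  is_operation E -> U1_invariant E ->
  exists c : Z -> nat -> nat -> C,
    (* K_{k,alpha} = S_k tilde K_{k,alpha}, tilde K_{k,alpha} = diag (c k alpha) *)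
    (forall X, trace_class X ->
       exists Y : Z -> nat -> op,
         (forall k a, sandwich (shift_diag k (c k a)) X (Y k a)) /\
         (forall p q, has_sum (fun ka : Z * nat => Y (fst ka) (snd ka) p q) (E X p q))) /\
    (forall n, exists s : R,
       has_sum (fun ka : Z * nat => RtoC (Cmod (c (fst ka) (snd ka) n) ^ 2)) (RtoC s)
       /\ s <= 1 /\ (trace_preserving E -> s = 1)).
Proof.
  intros HE HU. exists (kraus_coef E). split.
  - intros X HX. destruct (trace_class_dyad_sum X HX) as [a [b [A [B [Ha [Hb ->]]]]]].
    exists (fun k al p q => kraus_term E (dyad_sum a b) k al p q). split.
    + intros k al. apply sandwich_kraus_term.
    + intros p q. apply (kraus_term_has_sum E HE HU a b A B Ha Hb p q).
  - intros n. apply (kraus_coef_norm E HE HU n).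
Qed.
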